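(* Let $\alpha>1$, $k\in\mathbb{N}$, $m\in\mathbb{N}_0$ with $m\ge 1+\frac{k}{2}$, and $f\in\mathcal{M}_{\alpha,m}$. Fix $t_0,u_1,u_2\in\mathbb{R}$ with $t_0>1$ and $\frac12<u_1<u_2<\alpha$. Then there exists a continuous function $\tilde g_k:\mathbb{R}\to\mathbb{R}$ integrable at infinity such that $\left|\frac{\zeta^k(s)}{\zeta(2s)}f^*(s)\right|\le\tilde g_k(\operatorname{Im}(s))$ for all $s$ with $u_1\le\operatorname{Re}(s)\le u_2$ and $|\operatorname{Im}(s)|\ge t_0$.
   Context: For $\alpha>1$ and $m\in\mathbb{N}_0$, the class $\mathcal{M}_{\alpha,m}$ consists of the functions $f$ defined on $[0,\infty)$ such that $f\in\mathcal{C}^{(m)}([0,\infty))$ and $f^{(j)}(x)=\mathcal{O}(x^{-\alpha-j})$ as $x\to\infty$, for all $j=0,1,\dots,m$. $f^*(s)=\int_0^\infty f(x)x^{s-1}dx$ is the Mellin transform of $f$ (analytic for $0<\operatorname{Re}s<\alpha$). $\zeta$ is the Riemann zeta function. ''Integrable at infinity'' means $\int_{|t|\ge t_0}|\tilde g_k(t)|dt<\infty$. *)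

From Stdlib Require Import Reals.
From Coquelicot Require Import Coquelicot.
Open Scope R_scope.

(* complex power x^s = exp(s ln x) for a real x > 0 and s : C *)
Definition cpow (x : R) (s : C) : C :=
  (Rpower x (Re s) * cos (Im s * ln x), Rpower x (Re s) * sin (Im s * ln x)).

(* improper integral over (a, +oo) of a complex-valued function, via its real
   and imaginary parts (Coquelicot's C is not a normed R-module instance) *)
Definition CInt_gen (F : R -> C) (a : (R -> Prop) -> Prop) : C :=
  (RInt_gen (fun x => Re (F x)) a (Rbar_locally p_infty),
   RInt_gen (fun x => Im (F x)) a (Rbar_locally p_infty)).

Definition mellin (f : R -> R) (s : C) : C :=
  CInt_gen (fun x => Cmult (RtoC (f x)) (cpow x (Cminus s 1))) (at_right 0).

(* Riemann zeta function, for Re s > 0, s <> 1, by the standard continuation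
   zeta(s) = s/(s-1) - s * int_1^oo {x} x^(-s-1) dx
   (equal to sum_n n^-s for Re s > 1). Only used for Re s > 1/2, s <> 1. *)
Definition zeta (s : C) : C :=
  Cminus (Cdiv s (Cminus s 1))
    (Cmult s (CInt_gen (fun x => Cmult (RtoC (frac_part x)) (cpow x (Copp (Cplus s 1))))
                       (at_point 1))).

(* f in C^m([0,oo)) with f^(j)(x) = O(x^(-alpha-j)) as x -> oo, j = 0..m.
   F j is the j-th derivative of f on [0,oo) (one-sided at 0). *)
Definition class_M (alpha : R) (m : nat) (f : R -> R) : Prop :=
  exists F : nat -> R -> R,
    (forall x, 0 <= x -> F 0%nat x = f x) /\
    (forall j, (j <= m)%nat ->
       (forall x, 0 < x -> continuous (F j) x) /\
       filterlim (F j) (at_right 0) (locally (F j 0))) /\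
    (forall j, (j < m)%nat ->
       (forall x, 0 < x -> is_derive (F j) x (F (S j) x)) /\
       filterlim (fun h => (F j h - F j 0) / h) (at_right 0) (locally (F (S j) 0))) /\
    (forall j, (j <= m)%nat ->
       exists K X : R, 0 < X /\
         forall x, X <= x -> Rabs (F j x) <= K * Rpower x (- alpha - INR j)).

From Stdlib Require Import Reals Lra Lia ZArith.
From Coquelicot Require Import Coquelicot.
Open Scope R_scope.

(* Integrating by parts [m] times, the Mellin integral at [s] equals the one of
   [f^(m)] at [s + m] divided by [s (s + 1) ... (s + m - 1)]; the boundary terms
   vanish by the decay in the class [M_(alpha, m)], so [|f*(s)| << |t|^-m].
   Comparing the Dirichlet series with the integral up to [N = floor |t|] in the
   formula defining [zeta] gives [|zeta(s)| << |t|^(1 - b)] for [Re s >= b],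
   with [b = min(u1, 3/4) > 1/2].  On [Re w >= 2 u1 > 1], [zeta w] is bounded
   below: sieving out the primes [p < D] multiplies the series by
   [prod (1 - p^-w)], of modulus at most [2^D], and leaves [1] plus a tail that
   is small for [D] large.  Hence the integrand is [O(|t|^-p)] with
   [p = m - k (1 - b) >= 1 + k (b - 1/2) > 1], and a multiple of
   [(1 + |t|)^-p] is an integrable majorant. *)

Lemma Rpower_pos x e : 0 < Rpower x e.
Proof. apply exp_pos. Qed.

Lemma Rpower_1_base e : Rpower 1 e = 1.
Proof. unfold Rpower. rewrite ln_1, Rmult_0_r. apply exp_0. Qed.

Lemma Rpower_lt_anti x y e : 0 < x < y -> e < 0 -> Rpower y e < Rpower x e.
Proof.
  intros Hxy He. apply exp_increasing.
  apply Rmult_lt_gt_compat_neg_l; [lra|]. apply ln_increasing; lra.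
Qed.

Lemma Rpower_le_anti x y e : 0 < x <= y -> e <= 0 -> Rpower y e <= Rpower x e.
Proof.
  intros Hxy He. destruct (Req_dec x y) as [->|Hne]; [lra|].
  destruct (Req_dec e 0) as [->|He0]; [rewrite !Rpower_O; lra|].
  apply Rlt_le, Rpower_lt_anti; lra.
Qed.

Lemma Rpower_minus_1 x e : 0 < x -> Rpower x (e - 1) = Rpower x e / x.
Proof. intros Hx. unfold Rminus. now rewrite Rpower_plus, Rpower_Ropp, Rpower_1. Qed.

Lemma is_derive_Rpower x e : 0 < x -> is_derive (fun y => Rpower y e) x (e * Rpower x (e - 1)).
Proof. intros Hx. now apply is_derive_Reals, derivable_pt_lim_power. Qed.

Lemma continuous_Rpower x e : 0 < x -> continuous (fun y => Rpower y e) x.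
Proof.
  intros Hx. apply (ex_derive_continuous (V := R_NormedModule)).
  eexists. now apply is_derive_Rpower.
Qed.

Lemma is_RInt_Rpower x y c : 0 < x -> 0 < y -> c <> 0 ->
  is_RInt (fun t => Rpower t (c - 1)) x y ((Rpower y c - Rpower x c) / c).
Proof.
  intros Hx Hy Hc.
  assert (Hm : forall t, Rmin x y <= t <= Rmax x y -> 0 < t)
    by (intros t Ht; pose proof (Rmin_glb_lt _ _ _ Hx Hy); lra).
  replace ((Rpower y c - Rpower x c) / c) with (Rpower y c / c - Rpower x c / c) by (field; auto).
  apply (is_RInt_derive (fun t => Rpower t c / c)).
  - intros t Ht. specialize (Hm t Ht).
    rewrite Rpower_minus_1 by lra. unfold Rpower. auto_derive; [lra|]. field. split; lra.
  - intros t Ht. apply continuous_Rpower. auto.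
Qed.

Lemma ball_R (x y : R) (eps : R) : ball x eps y <-> Rabs (y - x) < eps.
Proof. reflexivity. Qed.

Lemma filterlim_locally_Rabs {T} {F : (T -> Prop) -> Prop} {FF : Filter F} (f : T -> R) l :
  filterlim f F (locally l) -> forall eps, 0 < eps -> F (fun x => Rabs (f x - l) < eps).
Proof. intros H eps He. exact (proj1 (filterlim_locally f l) H (mkposreal eps He)). Qed.

Lemma filterlim_at_point {T : UniformSpace} (f : R -> T) a : filterlim f (at_point a) (locally (f a)).
Proof. intros P HP. exact (locally_singleton _ _ HP). Qed.

Lemma at_right_0_interval X : 0 < X -> at_right 0 (fun x => 0 < x <= X).
Proof.
  intros HX. exists (mkposreal X HX). intros y Hy Hy0. split; [exact Hy0|].
  assert (Hy' : Rabs (y - 0) < X) by exact Hy.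
  rewrite Rminus_0_r, Rabs_pos_eq in Hy'; lra.
Qed.

Lemma filterlim_Rmult_l {T} {F : (T -> Prop) -> Prop} {FF : Filter F} (g : T -> R) K :
  filterlim g F (locally 0) -> filterlim (fun x => K * g x) F (locally 0).
Proof.
  intros Hg. rewrite <- (Rmult_0_r K).
  exact (filterlim_comp _ _ _ g (fun y => K * y) F (locally 0) _ Hg (filterlim_scal_r K 0)).
Qed.

Lemma Rpower_lim_at_right_0 e : 0 < e -> filterlim (fun x => Rpower x e) (at_right 0) (locally 0).
Proof.
  intros He. apply filterlim_locally. intros eps.
  exists (mkposreal _ (Rpower_pos eps (/ e))). intros y Hy Hy0.
  assert (Hy' : Rabs (y - 0) < Rpower eps (/ e)) by exact Hy.
  rewrite Rminus_0_r, Rabs_pos_eq in Hy' by lra.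
  apply ball_R. rewrite Rminus_0_r, Rabs_pos_eq by (apply Rlt_le, Rpower_pos).
  replace (pos eps) with (Rpower (Rpower eps (/ e)) e)
    by (rewrite Rpower_mult, Rinv_l, Rpower_1 by (pose proof (cond_pos eps); lra); reflexivity).
  apply Rlt_Rpower_l; lra.
Qed.

Lemma Rpower_lim_p_infty e : e < 0 -> filterlim (fun x => Rpower x e) (Rbar_locally p_infty) (locally 0).
Proof.
  intros He. apply filterlim_locally. intros eps.
  exists (Rpower eps (/ e)). intros x Hx.
  pose proof (Rpower_pos eps (/ e)).
  apply ball_R. rewrite Rminus_0_r, Rabs_pos_eq by (apply Rlt_le, Rpower_pos).
  replace (pos eps) with (Rpower (Rpower eps (/ e)) e)
    by (rewrite Rpower_mult, Rinv_l, Rpower_1 by (pose proof (cond_pos eps); lra); reflexivity).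
  apply Rpower_lt_anti; lra.
Qed.

Notation CisRInt := (@is_RInt C_R_NormedModule).
Notation CexRInt := (@ex_RInt C_R_NormedModule).
Notation CisRInt_gen := (@is_RInt_gen C_R_NormedModule).

Lemma norm_C (z : C) : @norm _ C_R_NormedModule z = Cmod z.
Proof. now rewrite Cmod_norm. Qed.

Lemma scal_C (r : R) (z : C) : @scal _ C_R_ModuleSpace r z = (RtoC r * z)%C.
Proof. apply scal_R_Cmult. Qed.

Lemma Re_plus (a b : C) : Re (a + b) = Re a + Re b.
Proof. destruct a, b. unfold Re; simpl. ring. Qed.

Lemma Im_plus (a b : C) : Im (a + b) = Im a + Im b.
Proof. destruct a, b. unfold Im; simpl. ring. Qed.

Lemma Re_minus (a b : C) : Re (a - b) = Re a - Re b.
Proof. destruct a, b. unfold Re; simpl. ring. Qed.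

Lemma Im_minus (a b : C) : Im (a - b) = Im a - Im b.
Proof. destruct a, b. unfold Im; simpl. ring. Qed.

Lemma Im_le_Cmod (z : C) : Rabs (Im z) <= Cmod z.
Proof.
  destruct z as [a b]. unfold Cmod, Im; simpl. rewrite <- sqrt_Rsqr_abs.
  apply sqrt_le_1_alt. unfold Rsqr. nra.
Qed.

Lemma Cmod_le_Re_Im (z : C) : Cmod z <= Rabs (Re z) + Rabs (Im z).
Proof.
  destruct z as [a b]. unfold Cmod, Re, Im; simpl.
  rewrite <- (sqrt_Rsqr (Rabs a + Rabs b)) by (pose proof (Rabs_pos a); pose proof (Rabs_pos b); lra).
  apply sqrt_le_1_alt. unfold Rsqr.
  pose proof (Rabs_pos a). pose proof (Rabs_pos b).
  assert (Ea : a * a = Rabs a * Rabs a) by (rewrite <- Rabs_mult; symmetry; apply Rabs_pos_eq; nra).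
  assert (Eb : b * b = Rabs b * Rabs b) by (rewrite <- Rabs_mult; symmetry; apply Rabs_pos_eq; nra).
  rewrite !Rmult_1_r, Ea, Eb. nra.
Qed.

Lemma filterlim_Cmod_le_0 {T} {F : (T -> Prop) -> Prop} {FF : Filter F} (g : T -> C) (u : T -> R) :
  F (fun x => Cmod (g x) <= u x) -> filterlim u F (locally 0) ->
  filterlim g F (@locally C_R_NormedModule (RtoC 0)).
Proof.
  intros Hgu Hu. apply (filterlim_locally_ball_norm (U := C_R_NormedModule)). intros eps.
  apply (filter_imp (fun x => Cmod (g x) <= u x /\ Rabs (u x - 0) < eps)).
  - intros x [H1 H2]. unfold ball_norm. rewrite norm_C.
    change (Cmod (g x - 0)%C < eps). replace (g x - 0)%C with (g x) by ring.
    rewrite Rminus_0_r in H2. pose proof (Rle_abs (u x)). lra.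
  - exact (filter_and _ _ Hgu (filterlim_locally_Rabs u 0 Hu eps (cond_pos eps))).
Qed.

Lemma filterlim_Cmod_0 {T} {F : (T -> Prop) -> Prop} {FF : Filter F} (g : T -> C) :
  filterlim g F (@locally C_R_NormedModule (RtoC 0)) -> filterlim (fun x => Cmod (g x)) F (locally 0).
Proof.
  intros H. rewrite <- Cmod_0.
  apply (filterlim_ext (fun x => @norm _ C_R_NormedModule (g x))); [intros; apply norm_C|].
  rewrite <- norm_C. exact (filterlim_comp _ _ _ g (@norm _ C_R_NormedModule) F _ _ H (filterlim_norm _)).
Qed.

Lemma filterlim_Cminus_prod_0 {Fa Fb : (R -> Prop) -> Prop} {FFa : Filter Fa} {FFb : Filter Fb}
    (g : R -> C) :
  filterlim g Fa (@locally C_R_NormedModule (RtoC 0)) -> filterlim g Fb (@locally C_R_NormedModule (RtoC 0)) ->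
  filterlim (fun ab => g (snd ab) - g (fst ab))%C (filter_prod Fa Fb) (@locally C_R_NormedModule (RtoC 0)).
Proof.
  intros Ha Hb. apply (filterlim_Cmod_le_0 _ (fun ab => Cmod (g (snd ab)) + Cmod (g (fst ab)))).
  - apply filter_forall. intros ab. unfold Cminus. eapply Rle_trans; [apply Cmod_triangle|].
    rewrite Cmod_opp. lra.
  - rewrite <- (Rplus_0_r 0).
    apply (filterlim_comp_2 (G := locally 0) (H := locally 0)
      (fun ab => Cmod (g (snd ab))) (fun ab => Cmod (g (fst ab))) Rplus);
      [| |apply (filterlim_plus (V := R_NormedModule) 0 0)].
    + apply (filterlim_comp _ _ _ snd (fun x => Cmod (g x)) _ Fb); [apply filterlim_snd|].
      now apply filterlim_Cmod_0.
    + apply (filterlim_comp _ _ _ fst (fun x => Cmod (g x)) _ Fa); [apply filterlim_fst|].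
      now apply filterlim_Cmod_0.
Qed.

Lemma cpow_plus x a b : 0 < x -> cpow x (a + b) = (cpow x a * cpow x b)%C.
Proof.
  intros Hx. unfold cpow. destruct a as [a1 a2], b as [b1 b2]; simpl.
  rewrite Rpower_plus, Rmult_plus_distr_r, cos_plus, sin_plus.
  apply injective_projections; simpl; ring.
Qed.

Lemma cpow_mult_distr x y s : 0 < x -> 0 < y -> cpow (x * y) s = (cpow x s * cpow y s)%C.
Proof.
  intros Hx Hy. unfold cpow. destruct s as [a b]; simpl.
  rewrite <- Rpower_mult_distr, ln_mult, Rmult_plus_distr_l, cos_plus, sin_plus by lra.
  apply injective_projections; simpl; ring.
Qed.

Lemma Cmod_cpow x s : 0 < x -> Cmod (cpow x s) = Rpower x (Re s).
Proof.
  intros Hx. unfold cpow, Cmod; cbn [fst snd].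
  set (P := Rpower x (Re s)). set (th := Im s * ln x).
  replace ((P * cos th) ^ 2 + (P * sin th) ^ 2) with (P ^ 2 * (sin th ^ 2 + cos th ^ 2)) by ring.
  rewrite <- !Rsqr_pow2, sin2_cos2, Rmult_1_r, Rsqr_pow2.
  apply sqrt_pow2, Rlt_le, Rpower_pos.
Qed.

Lemma cpow_1 x : 0 < x -> cpow x 1 = RtoC x.
Proof.
  intros Hx. unfold cpow; simpl. rewrite Rpower_1, Rmult_0_l, cos_0, sin_0 by lra.
  apply injective_projections; simpl; ring.
Qed.

Lemma cpow_base_1 w : cpow 1 w = 1%C.
Proof.
  unfold cpow. rewrite Rpower_1_base, ln_1, Rmult_0_r, cos_0, sin_0.
  apply injective_projections; simpl; ring.
Qed.

Lemma cpow_pred x w : 0 < x -> cpow x w = (RtoC x * cpow x (w - 1))%C.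
Proof.
  intros Hx. rewrite <- cpow_1, <- cpow_plus by lra. f_equal. ring.
Qed.

Lemma is_derive_pairC (f g : R -> R) x df dg :
  is_derive f x df -> is_derive g x dg ->
  @is_derive R_AbsRing C_R_NormedModule (fun y => (f y, g y) : C) x ((df, dg) : C).
Proof.
  intros Hf Hg.
  apply (filterdiff_comp_2 f g (fun a b => (a, b) : C) _ _ (fun a b => (a, b) : C) Hf Hg).
  apply (filterdiff_ext (fun t => t) _ _); [now intros [u v]|].
  apply filterdiff_ext_lin with (fun t => t); [apply filterdiff_id|now intros [u v]].
Qed.

Lemma is_derive_cpow x w : 0 < x ->
  @is_derive R_AbsRing C_R_NormedModule (fun y => cpow y w) x (w * cpow x (w - 1))%C.
Proof.
  intros Hx.
  replace (w * cpow x (w - 1))%C with (/ RtoC x * w * cpow x w)%C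
    by (rewrite (cpow_pred x w) by lra; field; intros E; apply RtoC_inj in E; lra).
  destruct w as [a b]. unfold cpow.
  apply is_derive_pairC; unfold Rpower; auto_derive; try lra;
    unfold Cmult, RtoC; simpl; field; lra.
Qed.

Lemma continuous_cpow x w : 0 < x -> @continuous R_UniformSpace C_R_NormedModule (fun y => cpow y w) x.
Proof.
  intros Hx. apply (ex_derive_continuous (V := C_R_NormedModule)).
  eexists. now apply is_derive_cpow.
Qed.

Lemma continuous_Rmult_cpow (F : R -> R) w x : 0 < x -> continuous F x ->
  @continuous R_UniformSpace C_R_NormedModule (fun y => (RtoC (F y) * cpow y w)%C) x.
Proof.
  intros Hx HF.
  apply (continuous_ext (fun y => @scal R_Ring C_R_ModuleSpace (F y) (cpow y w))); [intros; apply scal_C|].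
  apply (continuous_scal (V := C_R_NormedModule)); [exact HF|]. now apply continuous_cpow.
Qed.

Lemma Cmod_Rmult_cpow (F : R -> R) w x : 0 < x ->
  Cmod (RtoC (F x) * cpow x w)%C = Rabs (F x) * Rpower x (Re w).
Proof. intros Hx. now rewrite Cmod_mult, Cmod_R, Cmod_cpow. Qed.

Lemma is_linear_Cmult (c : C) : @is_linear R_AbsRing C_R_NormedModule C_R_NormedModule (fun z => c * z)%C.
Proof.
  split.
  - intros u v. change (@eq C (c * (u + v)) (c * u + c * v))%C. ring.
  - intros k u. rewrite !scal_C. change (@eq C (c * (k * u)) (k * (c * u)))%C. ring.
  - exists (Cmod c + 1). split; [pose proof (Cmod_ge_0 c); lra|].
    intros u. rewrite !norm_C, Cmod_mult. pose proof (Cmod_ge_0 u). nra.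
Qed.

Lemma continuous_Cmult_l (c : C) (g : R -> C) x :
  @continuous R_UniformSpace C_R_NormedModule g x ->
  @continuous R_UniformSpace C_R_NormedModule (fun y => c * g y)%C x.
Proof.
  intros Hg.
  exact (continuous_comp (V := C_R_NormedModule) (W := C_R_NormedModule) g _ x Hg
           (linear_cont _ _ (is_linear_Cmult c))).
Qed.

Lemma is_derive_Cmult_l (c : C) (g : R -> C) x l :
  @is_derive R_AbsRing C_R_NormedModule g x l ->
  @is_derive R_AbsRing C_R_NormedModule (fun y => c * g y)%C x (c * l)%C.
Proof.
  intros Hg. eapply filterdiff_ext_lin.
  - apply (filterdiff_comp g (fun z => c * z)%C _ (fun z => c * z)%C Hg).
    apply filterdiff_linear, is_linear_Cmult.
  - intros y. simpl. rewrite !scal_C. ring.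
Qed.

Lemma is_RInt_Cmult_l (c : C) h a b l : CisRInt h a b l -> CisRInt (fun x => c * h x)%C a b (c * l)%C.
Proof.
  intros H. destruct c as [c1 c2], l as [l1 l2].
  pose proof (is_RInt_fct_extend_fst _ _ _ _ H) as H1.
  pose proof (is_RInt_fct_extend_snd _ _ _ _ H) as H2.
  apply (is_RInt_fct_extend_pair (U := R_NormedModule) (V := R_NormedModule)).
  - eapply is_RInt_ext; [|apply (is_RInt_minus (V := R_NormedModule));
      apply (is_RInt_scal (V := R_NormedModule)); [exact H1|exact H2]].
    intros x _. cbv -[Rmult Rplus Ropp]. ring.
  - eapply is_RInt_ext; [|apply (is_RInt_plus (V := R_NormedModule));
      apply (is_RInt_scal (V := R_NormedModule)); [exact H2|exact H1]].
    intros x _. cbv -[Rmult Rplus Ropp]. ring.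
Qed.

Lemma is_RInt_gen_map {U V : NormedModule R_AbsRing} {Fa Fb : (R -> Prop) -> Prop}
    {FF : Filter (filter_prod Fa Fb)} (L : U -> V) (f : R -> U) l :
  continuous L l ->
  (forall a b y, is_RInt f a b y -> is_RInt (fun t => L (f t)) a b (L y)) ->
  is_RInt_gen f Fa Fb l -> is_RInt_gen (fun t => L (f t)) Fa Fb (L l).
Proof.
  intros HL HLint Hf P HP. unfold filtermapi.
  apply (filter_imp (fun ab => exists y, is_RInt f (fst ab) (snd ab) y /\ P (L y))).
  - intros ab [y [Hy Py]]. exists (L y). auto.
  - exact (Hf _ (HL P HP)).
Qed.

Lemma is_RInt_gen_Cmult_l (c : C) h Fa Fb {FFa : Filter Fa} {FFb : Filter Fb} l :
  CisRInt_gen h Fa Fb l -> CisRInt_gen (fun x => c * h x)%C Fa Fb (c * l)%C.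
Proof.
  apply (is_RInt_gen_map (fun z => c * z)%C); [apply linear_cont, is_linear_Cmult|].
  intros a b y. apply is_RInt_Cmult_l.
Qed.

Lemma CInt_gen_unique (h : R -> C) Fa {FFa : ProperFilter Fa} l :
  CisRInt_gen h Fa (Rbar_locally p_infty) l -> CInt_gen h Fa = l.
Proof.
  intros H. destruct l as [l1 l2]. unfold CInt_gen.
  f_equal; apply is_RInt_gen_unique.
  - apply (is_RInt_gen_map (V := R_NormedModule) fst h (l1, l2) (linear_cont _ _ is_linear_fst)); [|exact H].
    intros a b y. apply is_RInt_fct_extend_fst.
  - apply (is_RInt_gen_map (V := R_NormedModule) snd h (l1, l2) (linear_cont _ _ is_linear_snd)); [|exact H].
    intros a b y. apply is_RInt_fct_extend_snd.
Qed.

Lemma minus_plus_r {G : AbelianGroup} (x y : G) : minus (plus x y) y = x.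
Proof. change (plus (plus x y) (opp y) = x). now rewrite <- plus_assoc, plus_opp_r, plus_zero_r. Qed.

Lemma minus_RInt_Chasles {V : CompleteNormedModule R_AbsRing} (h : R -> V) a b a' b' :
  ex_RInt h a' a -> ex_RInt h a b -> ex_RInt h b b' ->
  minus (RInt h a' b') (RInt h a b) = plus (RInt h a' a) (RInt h b b').
Proof.
  intros H1 H2 H3.
  rewrite <- (RInt_Chasles h a' a b'), <- (RInt_Chasles h a b b')
    by (try apply (ex_RInt_Chasles h a b b'); auto).
  rewrite (plus_comm (RInt h a b)), plus_assoc.
  exact (minus_plus_r (G := CompleteNormedModule.AbelianGroup R_AbsRing V) _ _).
Qed.

Section Dominated.

Context {V : CompleteNormedModule R_AbsRing} (h : R -> V).

Lemma norm_RInt_le_antiderivative (D : R -> Prop) (Phi : R -> R) :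
  (forall x y, D x -> D y -> ex_RInt h x y) ->
  (forall x y, D x -> D y -> x <= y -> norm (RInt h x y) <= Phi y - Phi x) ->
  forall x y, D x -> D y -> norm (RInt h x y) <= Rabs (Phi y - Phi x).
Proof.
  intros Hex Hb x y Dx Dy. destruct (Rle_or_lt x y) as [Hxy|Hxy].
  - eapply Rle_trans; [apply Hb; auto|apply Rle_abs].
  - rewrite <- opp_RInt_swap, (@norm_opp _ V), Rabs_minus_sym by auto.
    eapply Rle_trans; [apply Hb; auto; lra|apply Rle_abs].
Qed.

(* Cauchy criterion: the increments of [Phi] control the integrals of [h]. *)
Lemma is_RInt_gen_dominated (Fa Fb : (R -> Prop) -> Prop) {FFa : ProperFilter Fa}
    {FFb : ProperFilter Fb} (D : R -> Prop) (Phi : R -> R) pa pb :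
  Fa D -> Fb D ->
  (forall x y, D x -> D y -> ex_RInt h x y) ->
  (forall x y, D x -> D y -> x <= y -> norm (RInt h x y) <= Phi y - Phi x) ->
  filterlim Phi Fa (locally pa) -> filterlim Phi Fb (locally pb) ->
  exists l, is_RInt_gen h Fa Fb l /\ norm l <= Rabs (pb - pa).
Proof.
  intros HDa HDb Hex Hb Hpa Hpb.
  pose proof (norm_RInt_le_antiderivative D Phi Hex Hb) as Hb2.
  set (F := filter_prod Fa Fb).
  assert (Hgood : forall eps, 0 < eps -> F (fun ab => D (fst ab) /\ D (snd ab) /\
             Rabs (Phi (fst ab) - pa) < eps /\ Rabs (Phi (snd ab) - pb) < eps)).
  { intros eps He.
    apply Filter_prod with (fun a => D a /\ Rabs (Phi a - pa) < eps)
      (fun b => D b /\ Rabs (Phi b - pb) < eps); [| |simpl; tauto];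
      apply filter_and; auto; apply filterlim_locally_Rabs; auto. }
  assert (Hcv : exists l : V, filterlim (fun ab => RInt h (fst ab) (snd ab)) F (locally l)).
  { apply (filterlim_locally_cauchy (U := V) (F := F)). intros eps.
    exists (fun ab => D (fst ab) /\ D (snd ab) /\
             Rabs (Phi (fst ab) - pa) < eps / 4 /\ Rabs (Phi (snd ab) - pb) < eps / 4).
    split; [apply Hgood; pose proof (cond_pos eps); lra|].
    intros [a b] [a' b'] (Da & Db & Ha & Hb') (Da' & Db' & Ha' & Hb''); simpl in *.
    apply (norm_compat1 (V := V)).
    eapply Rle_lt_trans; [apply Req_le, f_equal, minus_RInt_Chasles; auto|].
    eapply Rle_lt_trans; [apply (norm_triangle (V := V))|].
    pose proof (Hb2 a' a Da' Da). pose proof (Hb2 b b' Db Db').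
    revert Ha Ha' Hb' Hb'' H H0. unfold Rabs; repeat destruct Rcase_abs; intros; lra. }
  destruct Hcv as [l Hl]. exists l. split.
  - apply (filterlimi_lim_ext_loc (fun ab => RInt h (fst ab) (snd ab))); [|exact Hl].
    apply (filter_imp _ _ (fun ab H => RInt_correct h _ _ (Hex _ _ (proj1 H) (proj1 (proj2 H))))
             (Hgood 1 Rlt_0_1)).
  - apply Rle_plus_epsilon. intros eps He.
    assert (He3 : 0 < eps / 3) by lra.
    pose proof (proj1 (filterlim_locally_ball_norm (U := V) _ _) Hl (mkposreal _ He3)) as Hl3.
    destruct (filter_ex (F := F) _ (filter_and _ _ Hl3 (Hgood _ He3)))
      as [[a b] [Hab (Da & Db & Ha & Hb')]]. simpl in *.
    unfold ball_norm in Hab. simpl in Hab.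
    pose proof (Hb2 a b Da Db).
    pose proof (norm_triangle_inv (V := V) (RInt h a b) l).
    revert Ha Hb' Hab H H0. unfold Rabs; repeat destruct Rcase_abs; intros; lra.
Qed.

Lemma norm_RInt_le_Rpower K c x y : 0 < x <= y -> c <> 0 -> ex_RInt h x y ->
  (forall t, x <= t <= y -> norm (h t) <= K * Rpower t (c - 1)) ->
  norm (RInt h x y) <= K * Rpower y c / c - K * Rpower x c / c.
Proof.
  intros Hxy Hc Hex Hb.
  replace (K * Rpower y c / c - K * Rpower x c / c)
    with (scal K ((Rpower y c - Rpower x c) / c)) by (unfold scal; simpl; unfold mult; simpl; field; auto).
  apply (norm_RInt_le (V := V) h (fun t => scal K (Rpower t (c - 1))) x y); try tauto.
  - apply (RInt_correct (V := V)), Hex.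
  - apply (is_RInt_scal (V := R_NormedModule)), is_RInt_Rpower; lra.
Qed.

Lemma is_RInt_gen_Rpower_bound_at_infty a c K : 0 < a -> c < 0 ->
  (forall x y, a <= x -> a <= y -> ex_RInt h x y) ->
  (forall x, a <= x -> norm (h x) <= K * Rpower x (c - 1)) ->
  exists l, is_RInt_gen h (at_point a) (Rbar_locally p_infty) l /\ norm l <= K * Rpower a c / - c.
Proof.
  intros Ha Hc Hex Hb.
  destruct (is_RInt_gen_dominated (at_point a) (Rbar_locally p_infty) (fun x => a <= x)
      (fun x => K * Rpower x c / c) (K * Rpower a c / c) 0) as [l [Hl Bl]].
  - unfold at_point. lra.
  - exists a. intros. lra.
  - auto.
  - intros x y Hx Hy Hxy. apply norm_RInt_le_Rpower; auto; try lra.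
    intros t Ht. apply Hb. lra.
  - exact (filterlim_at_point (fun x => K * Rpower x c / c) a).
  - apply (filterlim_ext (fun x => (K / c) * Rpower x c)); [intros; unfold Rdiv; ring|].
    apply filterlim_Rmult_l, Rpower_lim_p_infty, Hc.
  - exists l. split; auto. eapply Rle_trans; [exact Bl|].
    assert (HK : 0 <= K * Rpower a (c - 1)) by (eapply Rle_trans; [apply (norm_ge_0 (h a))|apply Hb; lra]).
    pose proof (Rpower_pos a (c - 1)). pose proof (Rpower_pos a c).
    right. rewrite Rminus_0_l, Rabs_Ropp, Rabs_left1; [field; lra|].
    assert (0 <= K) by (apply (Rmult_le_reg_r (Rpower a (c - 1))); [auto|lra]).
    assert (/ c < 0) by (apply Rinv_lt_0_compat; lra).
    assert (0 <= K * Rpower a c) by (apply Rmult_le_pos; lra).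
    unfold Rdiv. nra.
Qed.

Lemma is_RInt_gen_Rpower_bound_at_0 X e M : 0 < X -> 0 < e ->
  (forall x y, 0 < x <= X -> 0 < y <= X -> ex_RInt h x y) ->
  (forall x, 0 < x <= X -> norm (h x) <= M * Rpower x (e - 1)) ->
  exists l, is_RInt_gen h (at_right 0) (at_point X) l /\ norm l <= M * Rpower X e / e.
Proof.
  intros HX He Hex Hb.
  destruct (is_RInt_gen_dominated (at_right 0) (at_point X) (fun x => 0 < x <= X)
      (fun x => M * Rpower x e / e) 0 (M * Rpower X e / e)) as [l [Hl Bl]].
  - now apply at_right_0_interval.
  - unfold at_point. lra.
  - auto.
  - intros x y Hx Hy Hxy. apply norm_RInt_le_Rpower; auto; try lra.
    intros t Ht. apply Hb. lra.
  - apply (filterlim_ext (fun x => (M / e) * Rpower x e)); [intros; unfold Rdiv; ring|].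
    apply filterlim_Rmult_l, Rpower_lim_at_right_0, He.
  - exact (filterlim_at_point (fun x => M * Rpower x e / e) X).
  - exists l. split; auto. eapply Rle_trans; [exact Bl|].
    assert (HM : 0 <= M * Rpower X (e - 1)) by (eapply Rle_trans; [apply (norm_ge_0 (h X))|apply Hb; lra]).
    pose proof (Rpower_pos X (e - 1)). pose proof (Rpower_pos X e).
    assert (0 <= M) by (apply (Rmult_le_reg_r (Rpower X (e - 1))); [auto|lra]).
    right. rewrite Rminus_0_r, Rabs_pos_eq; [reflexivity|].
    apply Rmult_le_pos; [apply Rmult_le_pos|apply Rlt_le, Rinv_0_lt_compat]; lra.
Qed.

End Dominated.

(** * The Mellin transform *)

Lemma bounded_near_0_and_decaying (G : R -> R) (c : R) :
  (forall x, 0 < x -> continuous G x) -> filterlim G (at_right 0) (locally (G 0)) ->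
  (exists K X, 0 < X /\ forall x, X <= x -> Rabs (G x) <= K * Rpower x c) ->
  exists M K X, 0 <= M /\ 0 <= K /\ 1 <= X /\ (forall x, 0 < x <= X -> Rabs (G x) <= M) /\
    (forall x, X <= x -> Rabs (G x) <= K * Rpower x c).
Proof.
  intros Gc G0 [K [X [HX HK]]].
  set (X' := Rmax X 1).
  destruct (proj1 (filterlim_locally _ _) G0 (mkposreal 1 Rlt_0_1)) as [d Hd].
  assert (Hd2 : 0 < d / 2) by (pose proof (cond_pos d); lra).
  destruct (bounded_continuity (V := R_NormedModule) G (d / 2) X') as [M' HM'].
  { intros x Hx. apply Gc. lra. }
  exists (Rmax (Rabs (G 0) + 1) M'), (Rabs K), X'. repeat split.
  - eapply Rle_trans; [|apply Rmax_l]. pose proof (Rabs_pos (G 0)); lra.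
  - apply Rabs_pos.
  - apply Rmax_r.
  - intros x [Hx1 Hx2]. destruct (Rlt_or_le x d) as [Hxd|Hxd].
    + eapply Rle_trans; [|apply Rmax_l].
      assert (B : Rabs (G x - G 0) < 1).
      { apply (Hd x); [apply ball_R; rewrite Rminus_0_r, Rabs_pos_eq; lra|exact Hx1]. }
      pose proof (Rabs_triang_inv (G x) (G 0)). lra.
    + eapply Rle_trans; [|apply Rmax_r]. apply Rlt_le, HM'. lra.
  - intros x Hx. assert (X <= x) by (eapply Rle_trans; [apply Rmax_l|exact Hx]).
    eapply Rle_trans; [apply HK; auto|].
    apply Rmult_le_compat_r; [apply Rlt_le, Rpower_pos|apply Rle_abs].
Qed.

Definition mellin_integrand (F : R -> R) (w : C) (x : R) : C := (RtoC (F x) * cpow x (w - 1))%C.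

Section MellinIntegrand.

Variables (F : R -> R) (M K X be : R).
Hypotheses (HX : 1 <= X) (HF : forall x, 0 < x -> continuous F x)
  (FM : forall x, 0 < x <= X -> Rabs (F x) <= M)
  (FK : forall x, X <= x -> Rabs (F x) <= K * Rpower x (- be)).

Lemma ex_RInt_mellin_integrand w x y : 0 < x -> 0 < y -> CexRInt (mellin_integrand F w) x y.
Proof.
  intros Hx Hy. apply (ex_RInt_continuous (V := C_R_CompleteNormedModule)).
  intros z Hz. pose proof (Rmin_glb_lt _ _ _ Hx Hy).
  apply continuous_Rmult_cpow; [lra|]. apply HF. lra.
Qed.

Lemma is_RInt_gen_mellin_integrand w : 0 < Re w < be ->
  exists l, CisRInt_gen (mellin_integrand F w) (at_right 0) (Rbar_locally p_infty) l /\
    Cmod l <= M * Rpower X (Re w) / Re w + K * Rpower X (Re w - be) / (be - Re w).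
Proof.
  intros Hw.
  destruct (is_RInt_gen_Rpower_bound_at_0 (V := C_R_CompleteNormedModule) (mellin_integrand F w)
      X (Re w) M) as [l1 [H1 B1]]; try lra.
  { intros x y Hx Hy. apply ex_RInt_mellin_integrand; lra. }
  { intros x Hx. rewrite norm_C. unfold mellin_integrand. rewrite Cmod_Rmult_cpow by lra.
    rewrite Re_minus.
    apply Rmult_le_compat_r; [apply Rlt_le, Rpower_pos|auto]. }
  destruct (is_RInt_gen_Rpower_bound_at_infty (V := C_R_CompleteNormedModule) (mellin_integrand F w)
      X (Re w - be) K) as [l2 [H2 B2]]; try lra.
  { intros x y Hx Hy. apply ex_RInt_mellin_integrand; lra. }
  { intros x Hx. rewrite norm_C. unfold mellin_integrand. rewrite Cmod_Rmult_cpow by lra.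
    rewrite Re_minus.
    replace (Re w - be - 1) with (- be + (Re w - 1)) by ring. rewrite Rpower_plus, <- Rmult_assoc.
    apply Rmult_le_compat_r; [apply Rlt_le, Rpower_pos|auto]. }
  exists (plus l1 l2). split.
  - apply (is_RInt_gen_Chasles (V := C_R_NormedModule)) with X; auto.
  - rewrite <- norm_C. eapply Rle_trans; [apply norm_triangle|].
    rewrite !norm_C in *. replace (be - Re w) with (- (Re w - be)) by ring. lra.
Qed.

Lemma boundary_term_lim_at_right_0 w : 0 < Re w ->
  filterlim (fun x => RtoC (F x) * cpow x w)%C (at_right 0) (@locally C_R_NormedModule (RtoC 0)).
Proof.
  intros Hw. apply (filterlim_Cmod_le_0 _ (fun x => M * Rpower x (Re w))).
  - apply (filter_imp (fun x => 0 < x <= X)); [|apply at_right_0_interval; lra].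
    intros x Hx. rewrite Cmod_Rmult_cpow by lra.
    apply Rmult_le_compat_r; [apply Rlt_le, Rpower_pos|auto].
  - apply filterlim_Rmult_l, Rpower_lim_at_right_0, Hw.
Qed.

Lemma boundary_term_lim_p_infty w : Re w < be ->
  filterlim (fun x => RtoC (F x) * cpow x w)%C (Rbar_locally p_infty) (@locally C_R_NormedModule (RtoC 0)).
Proof.
  intros Hw. apply (filterlim_Cmod_le_0 _ (fun x => K * Rpower x (Re w - be))).
  - exists X. intros x Hx. rewrite Cmod_Rmult_cpow by lra.
    replace (Re w - be) with (- be + Re w) by ring. rewrite Rpower_plus, <- Rmult_assoc.
    apply Rmult_le_compat_r; [apply Rlt_le, Rpower_pos|apply FK; lra].
  - apply filterlim_Rmult_l, Rpower_lim_p_infty. lra.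
Qed.

Lemma is_RInt_mellin_integrand_parts (F' : R -> R) w a b : 0 < a -> 0 < b ->
  (forall x, 0 < x -> is_derive F x (F' x)) -> (forall x, 0 < x -> continuous F' x) ->
  CisRInt (fun x => mellin_integrand F' (w + 1) x + w * mellin_integrand F w x)%C a b
    (RtoC (F b) * cpow b w - RtoC (F a) * cpow a w)%C.
Proof.
  intros Ha Hb HF' HcF'.
  assert (Hpos : forall t, Rmin a b <= t <= Rmax a b -> 0 < t)
    by (intros t Ht; pose proof (Rmin_glb_lt _ _ _ Ha Hb); lra).
  eapply is_RInt_ext; [|rewrite <- !scal_C; apply (is_RInt_scal_derive (V := C_R_CompleteNormedModule)
      F (fun x => cpow x w) F' (fun x => w * cpow x (w - 1))%C)].
  - intros x _. unfold mellin_integrand. rewrite !scal_C.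
    replace (w + 1 - 1)%C with w by ring. change (@eq C (F' x * cpow x w + F x * (w * cpow x (w - 1))) 
      (F' x * cpow x w + w * (F x * cpow x (w - 1))))%C. ring.
  - intros t Ht. apply HF'; auto.
  - intros t Ht. apply is_derive_cpow; auto.
  - intros t Ht. apply HcF'; auto.
  - intros t Ht. apply continuous_Cmult_l, continuous_cpow; auto.
Qed.

(* Integration by parts; the boundary terms vanish at [0] and at [+oo] because [0 < Re w < be]. *)
Lemma mellin_integral_parts (F' : R -> R) w l0 l1 : 0 < Re w < be ->
  (forall x, 0 < x -> is_derive F x (F' x)) -> (forall x, 0 < x -> continuous F' x) ->
  CisRInt_gen (mellin_integrand F w) (at_right 0) (Rbar_locally p_infty) l0 ->
  CisRInt_gen (mellin_integrand F' (w + 1)) (at_right 0) (Rbar_locally p_infty) l1 ->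
  l1 = (- w * l0)%C.
Proof.
  intros Hw HF' HcF' H0 H1.
  set (B := fun x => (RtoC (F x) * cpow x w)%C).
  set (h := fun x => (mellin_integrand F' (w + 1) x + w * mellin_integrand F w x)%C).
  assert (Hsum : CisRInt_gen h (at_right 0) (Rbar_locally p_infty) (l1 + w * l0)%C).
  { apply (is_RInt_gen_plus (V := C_R_NormedModule) (mellin_integrand F' (w + 1))
      (fun x => w * mellin_integrand F w x)%C); [exact H1|].
    apply is_RInt_gen_Cmult_l; [apply at_right_proper_filter|apply Rbar_locally_filter|exact H0]. }
  assert (Hzero : CisRInt_gen h (at_right 0) (Rbar_locally p_infty) (RtoC 0)).
  { apply (filterlimi_lim_ext_loc (fun ab => B (snd ab) - B (fst ab))%C).
    - apply (Filter_prod _ _ _ (fun x => 0 < x) (fun x => 0 < x));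
        [exists (mkposreal 1 Rlt_0_1); auto|exists 0; auto|].
      intros a b Ha Hb. now apply is_RInt_mellin_integrand_parts.
    - apply filterlim_Cminus_prod_0;
        [apply boundary_term_lim_at_right_0|apply boundary_term_lim_p_infty]; lra. }
  apply (is_RInt_gen_unique (V := C_R_CompleteNormedModule)) in Hsum, Hzero.
  rewrite Hsum in Hzero. change (@eq C l1 (- w * l0)%C).
  replace l1 with ((l1 + w * l0) - w * l0)%C by ring. rewrite Hzero. ring.
Qed.

End MellinIntegrand.

Lemma Re_shift (s : C) (j : nat) : Re (s + INR j)%C = Re s + INR j.
Proof. rewrite Re_plus. reflexivity. Qed.

Lemma Im_shift (s : C) (j : nat) : Im (s + INR j)%C = Im s.
Proof. rewrite Im_plus. unfold Im at 2. simpl. ring. Qed.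

Section ClassM.

Variables (alpha : R) (m : nat) (F : nat -> R -> R).
Hypothesis Fcont : forall j, (j <= m)%nat ->
  (forall x, 0 < x -> continuous (F j) x) /\ filterlim (F j) (at_right 0) (locally (F j 0)).
Hypothesis Fderiv : forall j, (j < m)%nat -> forall x, 0 < x -> is_derive (F j) x (F (S j) x).
Hypothesis Fdecay : forall j, (j <= m)%nat ->
  exists K X : R, 0 < X /\ forall x, X <= x -> Rabs (F j x) <= K * Rpower x (- alpha - INR j).

Lemma class_M_bounds j : (j <= m)%nat -> exists M K X, 0 <= M /\ 0 <= K /\ 1 <= X /\
    (forall x, 0 < x <= X -> Rabs (F j x) <= M) /\
    (forall x, X <= x -> Rabs (F j x) <= K * Rpower x (- (alpha + INR j))).
Proof.
  intros Hj. destruct (Fcont j Hj) as [Hc1 Hc2].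
  replace (- (alpha + INR j)) with (- alpha - INR j) by ring.
  apply bounded_near_0_and_decaying; auto.
Qed.

Lemma ex_mellin_integral j s : (j <= m)%nat -> 0 < Re s < alpha ->
  exists l, CisRInt_gen (mellin_integrand (F j) (s + INR j)) (at_right 0) (Rbar_locally p_infty) l.
Proof.
  intros Hj Hs. destruct (class_M_bounds j Hj) as [M [K [X (HM & HK & HX & FM & FK)]]].
  destruct (is_RInt_gen_mellin_integrand (F j) M K X (alpha + INR j) HX) with (w := (s + INR j)%C)
    as [l [Hl _]]; auto.
  - apply (Fcont j Hj).
  - rewrite Re_shift. pose proof (pos_INR j). lra.
  - now exists l.
Qed.

Lemma mellin_integral_descent j s l l' : (j < m)%nat -> 0 < Re s < alpha -> Im s <> 0 ->
  CisRInt_gen (mellin_integrand (F j) (s + INR j)) (at_right 0) (Rbar_locally p_infty) l ->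
  CisRInt_gen (mellin_integrand (F (S j)) (s + INR (S j))) (at_right 0) (Rbar_locally p_infty) l' ->
  Cmod l <= Cmod l' / Rabs (Im s).
Proof.
  intros Hj Hs Ht Hl Hl'.
  destruct (class_M_bounds j ltac:(lia)) as [M [K [X (HM & HK & HX & FM & FK)]]].
  rewrite S_INR, RtoC_plus, Cplus_assoc in Hl'.
  assert (Hw : 0 < Re (s + INR j)%C < alpha + INR j)
    by (rewrite Re_shift; pose proof (pos_INR j); lra).
  rewrite (mellin_integral_parts (F j) M K X (alpha + INR j) HX FM FK (F (S j)) (s + INR j) l l'
    Hw (Fderiv j Hj) (proj1 (Fcont (S j) Hj)) Hl Hl'), Cmod_mult, Cmod_opp.
  assert (Hm : Rabs (Im s) <= Cmod (s + INR j)%C) by (rewrite <- (Im_shift s j); apply Im_le_Cmod).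
  apply Rmult_le_reg_r with (Rabs (Im s)); [now apply Rabs_pos_lt|].
  unfold Rdiv. rewrite Rmult_assoc, Rinv_l, Rmult_1_r by (now apply Rabs_no_R0).
  rewrite Rmult_comm. apply Rmult_le_compat_r; [apply Cmod_ge_0|exact Hm].
Qed.

Lemma mellin_integral_top_bound u1 u2 : 0 < u1 -> u2 < alpha -> exists C0, 0 <= C0 /\
  forall s l, u1 <= Re s <= u2 ->
    CisRInt_gen (mellin_integrand (F m) (s + INR m)) (at_right 0) (Rbar_locally p_infty) l ->
    Cmod l <= C0.
Proof.
  intros Hu1 Hu2. destruct (class_M_bounds m (le_n m)) as [M [K [X (HM & HK & HX & FM & FK)]]].
  pose proof (pos_INR m).
  exists (M * Rpower X (u2 + INR m) / u1 + K / (alpha - u2)). split.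
  { pose proof (Rpower_pos X (u2 + INR m)).
    apply Rplus_le_le_0_compat; unfold Rdiv; repeat apply Rmult_le_pos; auto;
      apply Rlt_le; try apply Rinv_0_lt_compat; lra. }
  intros s l Hs Hl.
  destruct (is_RInt_gen_mellin_integrand (F m) M K X (alpha + INR m) HX (proj1 (Fcont m (le_n m))) FM FK
    (s + INR m)) as [l' [Hl' Bl']]; [rewrite Re_shift; lra|].
  replace l with l' by (apply (is_RInt_gen_unique (V := C_R_CompleteNormedModule)) in Hl, Hl';
    now rewrite <- Hl, <- Hl').
  eapply Rle_trans; [exact Bl'|]. rewrite Re_shift. apply Rplus_le_compat.
  - unfold Rdiv. apply Rmult_le_compat.
    + apply Rmult_le_pos; [exact HM|apply Rlt_le, Rpower_pos].
    + apply Rlt_le, Rinv_0_lt_compat. lra.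
    + apply Rmult_le_compat_l; [exact HM|]. apply Rle_Rpower; lra.
    + apply Rinv_le_contravar; lra.
  - replace (Re s + INR m - (alpha + INR m)) with (Re s - alpha) by ring.
    replace (alpha + INR m - (Re s + INR m)) with (alpha - Re s) by ring.
    unfold Rdiv. rewrite Rmult_assoc. apply Rmult_le_compat_l; [exact HK|].
    apply Rle_trans with (1 * / (alpha - Re s)).
    + apply Rmult_le_compat_r; [apply Rlt_le, Rinv_0_lt_compat; lra|].
      rewrite <- (Rpower_O X) by lra. apply Rle_Rpower; lra.
    + rewrite Rmult_1_l. apply Rinv_le_contravar; lra.
Qed.

Lemma mellin_integral_decay u1 u2 : 0 < u1 -> u2 < alpha -> exists C0, 0 <= C0 /\
  forall s l, u1 <= Re s <= u2 -> 1 <= Rabs (Im s) ->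
    CisRInt_gen (mellin_integrand (F 0) s) (at_right 0) (Rbar_locally p_infty) l ->
    Cmod l <= C0 / Rabs (Im s) ^ m.
Proof.
  intros Hu1 Hu2. destruct (mellin_integral_top_bound u1 u2 Hu1 Hu2) as [C0 [HC0 Btop]].
  exists C0. split; [exact HC0|]. intros s l Hs Ht Hl.
  assert (Hdesc : forall i, (i <= m)%nat -> forall l,
    CisRInt_gen (mellin_integrand (F (m - i)) (s + INR (m - i))) (at_right 0) (Rbar_locally p_infty) l ->
    Cmod l <= C0 / Rabs (Im s) ^ i).
  { induction i as [|i IH]; intros Hi l' Hl'.
    - rewrite Nat.sub_0_r in Hl'. simpl pow. rewrite Rdiv_1_r. now apply (Btop s).
    - destruct (ex_mellin_integral (S (m - S i)) s ltac:(lia) ltac:(lra)) as [l'' Hl''].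
      replace (S (m - S i)) with (m - i)%nat in Hl'' by lia.
      eapply Rle_trans; [apply (mellin_integral_descent (m - S i) s l' l''); auto; try lia; try lra|].
      + intros E. rewrite E, Rabs_R0 in Ht. lra.
      + now replace (S (m - S i)) with (m - i)%nat by lia.
      + simpl pow. unfold Rdiv. rewrite Rinv_mult, (Rmult_comm (/ Rabs (Im s))), <- Rmult_assoc.
        apply Rmult_le_compat_r; [apply Rlt_le, Rinv_0_lt_compat; lra|].
        apply (IH ltac:(lia) l'' Hl''). }
  apply (Hdesc m (le_n m) l). rewrite Nat.sub_diag.
  replace (s + INR 0)%C with s by (simpl; ring). exact Hl.
Qed.

End ClassM.

Lemma mellin_bound alpha m f u1 u2 : class_M alpha m f -> 0 < u1 -> u2 < alpha ->
  exists C0, 0 <= C0 /\ forall s, u1 <= Re s <= u2 -> 1 <= Rabs (Im s) ->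
    Cmod (mellin f s) <= C0 / Rabs (Im s) ^ m.
Proof.
  intros [F [HF0 [Hc [Hd Hb]]]] Hu1 Hu2.
  assert (Hd' : forall j, (j < m)%nat -> forall x, 0 < x -> is_derive (F j) x (F (S j) x))
    by (intros j Hj; apply (Hd j Hj)).
  destruct (mellin_integral_decay alpha m F Hc Hd' Hb u1 u2 Hu1 Hu2) as [C0 [HC0 Bdecay]].
  exists C0. split; [exact HC0|]. intros s Hs Ht.
  destruct (ex_mellin_integral alpha m F Hc Hb 0 s ltac:(lia) ltac:(lra)) as [l Hl].
  replace (s + INR 0)%C with s in Hl by (simpl; ring).
  replace (mellin f s) with l; [now apply (Bdecay s)|].
  symmetry. apply CInt_gen_unique; [apply at_right_proper_filter|].
  apply (is_RInt_gen_ext (V := C_R_NormedModule) (mellin_integrand (F O) s)); [|exact Hl].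
  apply (Filter_prod _ _ _ (fun x => 0 < x) (fun x => 0 < x));
    [exists (mkposreal 1 Rlt_0_1); auto|exists 0; auto|].
  intros a b Ha Hb' x Hx. pose proof (Rmin_glb_lt _ _ _ Ha Hb').
  assert (0 < x) by (destruct Hx as [Hx _]; eapply Rlt_trans; eassumption).
  unfold mellin_integrand. rewrite HF0 by lra. reflexivity.
Qed.

(** * Growth of zeta on vertical strips *)

Fixpoint csum (f : nat -> C) (N : nat) : C :=
  match N with O => 0%C | S k => (csum f k + f (S k))%C end.

Fixpoint rsum (f : nat -> R) (N : nat) : R :=
  match N with O => 0 | S k => rsum f k + f (S k) end.

Lemma csum_ext (f g : nat -> C) N : (forall n, (1 <= n <= N)%nat -> f n = g n) -> csum f N = csum g N.
Proof.
  induction N as [|N IH]; intros H; simpl; auto.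
  rewrite IH by (intros; apply H; lia). rewrite H by lia. reflexivity.
Qed.

Lemma csum_mult_l c (f : nat -> C) N : csum (fun n => c * f n)%C N = (c * csum f N)%C.
Proof. induction N as [|N IH]; simpl; [ring|]. rewrite IH. ring. Qed.

Lemma csum_minus (f g : nat -> C) N : csum (fun n => f n - g n)%C N = (csum f N - csum g N)%C.
Proof. induction N as [|N IH]; simpl; [ring|]. rewrite IH. ring. Qed.

Lemma Cmod_csum_diff_le (f : nat -> C) (g : nat -> R) N M : (N <= M)%nat ->
  (forall n, (N < n <= M)%nat -> Cmod (f n) <= g n) ->
  Cmod (csum f M - csum f N)%C <= rsum g M - rsum g N.
Proof.
  intros HNM. induction M as [|M IH]; intros H.
  - replace N with 0%nat by lia. simpl. replace (0 - 0)%C with (RtoC 0) by ring.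
    rewrite Cmod_0. lra.
  - destruct (Nat.eq_dec N (S M)) as [<-|Hne].
    + rewrite Rminus_eq_0, <- Cmod_0. right. f_equal. ring.
    + cbn [csum rsum]. replace (csum f M + f (S M) - csum f N)%C with ((csum f M - csum f N) + f (S M))%C by ring.
      eapply Rle_trans; [apply Cmod_triangle|].
      assert (Cmod (csum f M - csum f N)%C <= rsum g M - rsum g N) by (apply IH; [lia|intros; apply H; lia]).
      assert (Cmod (f (S M)) <= g (S M)) by (apply H; lia). lra.
Qed.

Lemma Cmod_csum_le (f : nat -> C) (g : nat -> R) N :
  (forall n, (1 <= n <= N)%nat -> Cmod (f n) <= g n) -> Cmod (csum f N) <= rsum g N.
Proof.
  intros H. replace (csum f N) with (csum f N - csum f 0)%C by (simpl; ring).
  replace (rsum g N) with (rsum g N - rsum g 0) by (simpl; ring).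
  apply Cmod_csum_diff_le; [lia|]. intros n Hn. apply H. lia.
Qed.

Lemma Rpower_succ_diff x b : 0 < x -> exists c, x <= c <= x + 1 /\
  Rpower (x + 1) (1 - b) - Rpower x (1 - b) = (1 - b) * Rpower c (- b).
Proof.
  intros Hx.
  destruct (MVT_gen (fun y => Rpower y (1 - b)) x (x + 1) (fun y => (1 - b) * Rpower y (1 - b - 1)))
    as [c [Hc E]].
  - intros y Hy. rewrite Rmin_left, Rmax_right in Hy by lra. apply is_derive_Rpower. lra.
  - intros y Hy. rewrite Rmin_left, Rmax_right in Hy by lra.
    apply continuity_pt_filterlim, continuous_Rpower. lra.
  - rewrite Rmin_left, Rmax_right in Hc by lra. exists c. split; [exact Hc|]. rewrite E.
    replace (1 - b - 1) with (- b) by ring. ring.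
Qed.

(* Comparison of [sum n^-b] with [int x^-b dx]. *)
Lemma rsum_Rpower_diff_le b N M : 0 <= b -> b <> 1 -> (1 <= N <= M)%nat ->
  rsum (fun n => Rpower (INR n) (- b)) M - rsum (fun n => Rpower (INR n) (- b)) N
    <= (Rpower (INR M) (1 - b) - Rpower (INR N) (1 - b)) / (1 - b).
Proof.
  intros Hb Hb1 HNM. induction M as [|M IH]; [lia|].
  destruct (Nat.eq_dec N (S M)) as [<-|HNM'].
  - rewrite !Rminus_eq_0. unfold Rdiv. lra.
  - specialize (IH ltac:(lia)). cbn [rsum].
    assert (HM1 : 1 <= INR M) by (apply (le_INR 1); lia).
    destruct (Rpower_succ_diff (INR M) b ltac:(lra)) as [c [Hc E]].
    rewrite S_INR.
    assert (Rpower (INR M + 1) (- b) <= Rpower c (- b)) by (apply Rpower_le_anti; lra).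
    replace ((Rpower (INR M + 1) (1 - b) - Rpower (INR N) (1 - b)) / (1 - b))
      with ((Rpower (INR M) (1 - b) - Rpower (INR N) (1 - b)) / (1 - b)
            + (Rpower (INR M + 1) (1 - b) - Rpower (INR M) (1 - b)) / (1 - b))
      by (field; lra).
    rewrite E. replace ((1 - b) * Rpower c (- b) / (1 - b)) with (Rpower c (- b)) by (field; lra).
    lra.
Qed.

Lemma rsum_Rpower_le b N : 0 < b < 1 -> (1 <= N)%nat ->
  rsum (fun n => Rpower (INR n) (- b)) N <= Rpower (INR N) (1 - b) / (1 - b).
Proof.
  intros Hb HN. pose proof (rsum_Rpower_diff_le b 1 N ltac:(lra) ltac:(lra) ltac:(lia)) as H.
  simpl rsum in H. simpl INR in H. rewrite !Rpower_1_base in H.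
  assert (1 <= / (1 - b)) by (rewrite <- Rinv_1; apply Rinv_le_contravar; lra).
  unfold Rdiv in *. nra.
Qed.

Lemma rsum_Rpower_tail_le b N M : 1 < b -> (1 <= N <= M)%nat ->
  rsum (fun n => Rpower (INR n) (- b)) M - rsum (fun n => Rpower (INR n) (- b)) N
    <= Rpower (INR N) (1 - b) / (b - 1).
Proof.
  intros Hb HNM. eapply Rle_trans; [apply rsum_Rpower_diff_le; lra || lia|].
  pose proof (Rpower_pos (INR M) (1 - b)).
  replace ((Rpower (INR M) (1 - b) - Rpower (INR N) (1 - b)) / (1 - b))
    with (Rpower (INR N) (1 - b) / (b - 1) - Rpower (INR M) (1 - b) / (b - 1)) by (field; lra).
  assert (0 < / (b - 1)) by (apply Rinv_0_lt_compat; lra). unfold Rdiv. nra.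
Qed.

Lemma frac_part_on_unit_interval (n : nat) x : INR n < x < INR n + 1 -> frac_part x = x - INR n.
Proof.
  intros Hx. unfold frac_part, Int_part.
  replace (up x) with (Z.of_nat n + 1)%Z
    by (apply tech_up; rewrite plus_IZR, <- INR_IZR_INZ; simpl; lra).
  replace (Z.of_nat n + 1 - 1)%Z with (Z.of_nat n) by ring. rewrite <- INR_IZR_INZ. ring.
Qed.

Lemma nat_floor x : 0 <= x -> exists N : nat, INR N <= x < INR N + 1.
Proof.
  intros Hx. destruct (archimed x) as [H1 H2].
  assert (Hz : (1 <= up x)%Z).
  { apply le_IZR. apply Rnot_lt_le. intros Hc.
    assert (up x <= 0)%Z by (apply Z.lt_succ_r, lt_IZR; simpl; lra).
    apply IZR_le in H. simpl in H. lra. }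
  exists (Z.to_nat (up x - 1)). rewrite INR_IZR_INZ, Z2Nat.id, minus_IZR by lia. simpl. lra.
Qed.

Definition zeta_integrand (s : C) (x : R) : C := (RtoC (frac_part x) * cpow x (- (s + 1)))%C.

Definition dirichlet_term (s : C) (n : nat) : C := cpow (INR n) (- s).

Lemma Cmod_dirichlet_term (s : C) n : (1 <= n)%nat -> Cmod (dirichlet_term s n) = Rpower (INR n) (- Re s).
Proof. intros Hn. unfold dirichlet_term. rewrite Cmod_cpow; [reflexivity|apply (lt_INR 0); lia]. Qed.

Lemma ex_RInt_zeta_integrand_unit (s : C) (n : nat) a b : 1 <= INR n -> INR n <= a -> a <= b -> b <= INR n + 1 ->
  CexRInt (zeta_integrand s) a b.
Proof.
  intros Hn Ha Hab Hb.
  set (g := fun x => (RtoC (x - INR n) * cpow x (- (s + 1)))%C).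
  assert (Eg : CexRInt g a b).
  { apply (ex_RInt_continuous (V := C_R_CompleteNormedModule)). intros z Hz.
    rewrite Rmin_left, Rmax_right in Hz by lra.
    apply (continuous_Rmult_cpow (fun x => x - INR n)); [lra|].
    apply (ex_derive_continuous (V := R_NormedModule)). auto_derive; auto. }
  destruct (Req_dec a b) as [<-|Hne]; [apply (ex_RInt_point (V := C_R_CompleteNormedModule))|].
  apply (ex_RInt_ext g); [|exact Eg].
  intros x Hx. rewrite Rmin_left, Rmax_right in Hx by lra.
  unfold g, zeta_integrand. rewrite (frac_part_on_unit_interval n x); [reflexivity|lra].
Qed.

Lemma ex_RInt_zeta_integrand (s : C) a b : 1 <= a -> 1 <= b -> CexRInt (zeta_integrand s) a b.
Proof.
  assert (Hnat : forall N : nat, CexRInt (zeta_integrand s) 1 (INR (S N))).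
  { induction N as [|N IH]; [apply (ex_RInt_point (V := C_R_CompleteNormedModule))|].
    apply (ex_RInt_Chasles (V := C_R_NormedModule)) with (INR (S N)); [exact IH|].
    pose proof (pos_INR N). rewrite (S_INR (S N)).
    apply ex_RInt_zeta_integrand_unit with (S N); rewrite ?S_INR; lra. }
  assert (Hy : forall y, 1 <= y -> CexRInt (zeta_integrand s) 1 y).
  { intros y Hy. destruct (nat_floor y) as [N [HN1 HN2]]; [lra|].
    destruct N as [|N]; [simpl in HN2; lra|].
    apply (ex_RInt_Chasles (V := C_R_NormedModule)) with (INR (S N)); [apply Hnat|].
    pose proof (pos_INR N). rewrite S_INR in *.
    apply ex_RInt_zeta_integrand_unit with (S N); rewrite ?S_INR; lra. }
  intros Ha Hb. apply (ex_RInt_Chasles (V := C_R_NormedModule)) with 1.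
  - apply (ex_RInt_swap (V := C_R_NormedModule)). auto.
  - auto.
Qed.

Lemma is_RInt_gen_zeta_integrand (s : C) a : 1 <= a -> 0 < Re s ->
  exists l, CisRInt_gen (zeta_integrand s) (at_point a) (Rbar_locally p_infty) l /\
    Cmod l <= Rpower a (- Re s) / Re s.
Proof.
  intros Ha Hs.
  destruct (is_RInt_gen_Rpower_bound_at_infty (V := C_R_CompleteNormedModule) (zeta_integrand s)
      a (- Re s) 1) as [l [H1 H2]]; try lra.
  - intros; apply ex_RInt_zeta_integrand; lra.
  - intros x Hx. rewrite norm_C. unfold zeta_integrand. rewrite Cmod_Rmult_cpow, Rmult_1_l by lra.
    replace (Re (- (s + 1))%C) with (- Re s - 1) by (rewrite re_opp, Re_plus; simpl; ring).
    destruct (base_fp x). rewrite Rabs_pos_eq by lra.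
    pose proof (Rpower_pos x (- Re s - 1)). nra.
  - exists l. split; [exact H1|]. rewrite norm_C, Ropp_involutive, Rmult_1_l in H2. exact H2.
Qed.

Lemma is_RInt_zeta_integrand_unit (s : C) (N : nat) : (1 <= N)%nat -> s <> 0%C -> s <> 1%C ->
  CisRInt (zeta_integrand s) (INR N) (INR N + 1)
    ((cpow (INR N + 1) (1 - s) - cpow (INR N) (1 - s)) / (1 - s)
     + INR N * (cpow (INR N + 1) (- s) - cpow (INR N) (- s)) / s)%C.
Proof.
  intros HN Hs Hs1. assert (HN' : 1 <= INR N) by (apply (le_INR 1); auto).
  assert (Hs1' : (1 - s)%C <> 0%C) by (intros E; apply Hs1;
    replace s with (1 - (1 - s))%C by ring; rewrite E; ring).
  set (A := fun x => (/ (1 - s) * cpow x (1 - s) + (INR N / s) * cpow x (- s))%C).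
  set (dA := fun x => (/ (1 - s) * ((1 - s) * cpow x (1 - s - 1))
                       + (INR N / s) * ((- s) * cpow x (- s - 1)))%C).
  assert (Hpos : forall t, Rmin (INR N) (INR N + 1) <= t <= Rmax (INR N) (INR N + 1) -> 0 < t)
    by (intros t Ht; rewrite Rmin_left in Ht; lra).
  assert (HA : CisRInt dA (INR N) (INR N + 1) (A (INR N + 1)%R - A (INR N))%C).
  { apply (is_RInt_derive (V := C_R_CompleteNormedModule) A dA).
    - intros t Ht. specialize (Hpos t Ht). unfold A, dA.
      apply (is_derive_plus (V := C_R_NormedModule)); apply is_derive_Cmult_l, is_derive_cpow; auto.
    - intros t Ht. specialize (Hpos t Ht). unfold dA.
      apply (continuous_plus (V := C_R_NormedModule)); apply continuous_Cmult_l, continuous_Cmult_l,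
        continuous_cpow; auto. }
  replace (_ + _)%C with (A (INR N + 1)%R - A (INR N))%C.
  2: { unfold A. set (n := RtoC (INR N)).
       set (a1 := cpow (INR N + 1) (1 - s)). set (a0 := cpow (INR N) (1 - s)).
       set (b1 := cpow (INR N + 1) (- s)). set (b0 := cpow (INR N) (- s)).
       field. auto. }
  apply (is_RInt_ext dA); [|exact HA].
  intros x Hx. rewrite Rmin_left, Rmax_right in Hx by lra.
  unfold zeta_integrand, dA. match goal with |- ?a = ?b => change (@eq C a b) end.
  rewrite (frac_part_on_unit_interval N x Hx).
  replace (1 - s - 1)%C with (- s)%C by ring. replace (- s - 1)%C with (- (s + 1))%C by ring.
  rewrite (cpow_pred x (- s)) by lra. replace (- s - 1)%C with (- (s + 1))%C by ring.
  rewrite RtoC_minus. field. auto.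
Qed.

(* The Euler--Maclaurin form of the continuation used to define [zeta]. *)
Lemma zeta_partial_sum (s : C) (N : nat) l : 0 < Re s -> s <> 1%C -> (1 <= N)%nat ->
  CisRInt_gen (zeta_integrand s) (at_point (INR N)) (Rbar_locally p_infty) l ->
  zeta s = (csum (dirichlet_term s) N + cpow (INR N) (1 - s) / (s - 1) - s * l)%C.
Proof.
  intros Hs Hs1 HN.
  assert (Hs0 : s <> 0%C) by (intros E; rewrite E in Hs; simpl in Hs; lra).
  assert (Hsm : (s - 1)%C <> 0%C) by (intros E; apply Hs1; replace s with ((s - 1) + 1)%C by ring;
    rewrite E; ring).
  revert l. induction N as [|N IH]; [lia|]. intros l Hl.
  destruct (Nat.eq_dec N 0) as [->|HN0].
  - simpl csum. unfold dirichlet_term. simpl INR. rewrite !cpow_base_1.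
    unfold zeta. fold (zeta_integrand s).
    rewrite (CInt_gen_unique (zeta_integrand s) (at_point 1) l Hl). field. auto.
  - destruct (is_RInt_gen_zeta_integrand s (INR N) ltac:(apply (le_INR 1); lia) Hs) as [l0 [Hl0 _]].
    rewrite (IH ltac:(lia) l0 Hl0).
    assert (Hp := proj2 (is_RInt_gen_at_point _ _ _ _)
      (is_RInt_zeta_integrand_unit s N ltac:(lia) Hs0 Hs1)).
    rewrite <- S_INR in Hp.
    pose proof (is_RInt_gen_Chasles (V := C_R_NormedModule) _ _ _ _ Hp Hl) as Hl0'.
    apply (is_RInt_gen_unique (V := C_R_CompleteNormedModule)) in Hl0, Hl0'.
    rewrite Hl0' in Hl0. rewrite <- Hl0. clear Hl0 Hl0' Hp IH.
    simpl csum. unfold dirichlet_term. rewrite S_INR.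
    assert (HN1 : 0 < INR N) by (apply (lt_INR 0); lia).
    rewrite (cpow_pred (INR N) (1 - s)), (cpow_pred (INR N + 1) (1 - s)) by lra.
    replace (1 - s - 1)%C with (- s)%C by ring. rewrite RtoC_plus.
    set (S0 := csum (fun n : nat => cpow (INR n) (- s)) N).
    set (u := cpow (INR N + 1) (- s)). set (v := cpow (INR N) (- s)). set (n := RtoC (INR N)).
    change (@eq C (S0 + n * v / (s - 1) - s * plus (((n + 1) * u - n * v) / (1 - s) + n * (u - v) / s) l)
      (S0 + u + (n + 1) * u / (s - 1) - s * l))%C.
    assert (Hms : (1 - s)%C <> 0%C) by (intros E; apply Hsm; replace (s - 1)%C with (- (1 - s))%C by ring;
      rewrite E; ring).
    unfold plus; simpl. field. auto.
Qed.

Lemma Cmod_dirichlet_partial_sum_le (s : C) b N : 0 < b < 1 -> b <= Re s -> (1 <= N)%nat ->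
  Cmod (csum (dirichlet_term s) N) <= Rpower (INR N) (1 - b) / (1 - b).
Proof.
  intros Hb Hs HN. eapply Rle_trans; [apply (Cmod_csum_le _ (fun n => Rpower (INR n) (- b)))|].
  - intros n Hn. rewrite Cmod_dirichlet_term by lia.
    apply Rle_Rpower; [apply (le_INR 1); lia|lra].
  - now apply rsum_Rpower_le.
Qed.

Lemma Rpower_opp_le_twice x t b : 1 <= x <= t -> t < x + 1 -> 0 <= b <= 1 ->
  Rpower x (- b) <= 2 * Rpower t (- b).
Proof.
  intros Hxt Htx Hb. rewrite !Rpower_Ropp.
  assert (Rpower t b <= Rpower 2 b * Rpower x b)
    by (rewrite Rpower_mult_distr by lra; apply Rle_Rpower_l; lra).
  assert (Rpower 2 b <= 2) by (rewrite <- (Rpower_1 2) at 2 by lra; apply Rle_Rpower; lra).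
  pose proof (Rpower_pos t b). pose proof (Rpower_pos x b).
  apply Rmult_le_reg_r with (Rpower x b * Rpower t b); [nra|].
  field_simplify; lra || nra.
Qed.

Lemma Cmod_zeta_pole_term_le (s : C) b N : b <= 1 -> 1 <= INR N <= Rabs (Im s) -> b <= Re s ->
  Cmod (cpow (INR N) (1 - s) / (s - 1))%C <= Rpower (Rabs (Im s)) (1 - b).
Proof.
  intros Hb HN Hs.
  assert (Hts : Rabs (Im s) <= Cmod (s - 1)%C).
  { replace (Im s) with (Im (s - 1)%C) by (rewrite Im_minus; simpl; ring). apply Im_le_Cmod. }
  rewrite Cmod_div, Cmod_cpow, Re_minus, re_RtoC by (lra || (intros E; rewrite E, Cmod_0 in Hts; lra)).
  apply Rle_trans with (Rpower (INR N) (1 - b) * 1).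
  - unfold Rdiv. apply Rmult_le_compat.
    + apply Rlt_le, Rpower_pos.
    + apply Rlt_le, Rinv_0_lt_compat. lra.
    + apply Rle_Rpower; lra.
    + apply (Rmult_le_reg_l (Cmod (s - 1))); [lra|]. rewrite Rinv_r, Rmult_1_r; lra.
  - rewrite Rmult_1_r. apply Rle_Rpower_l; lra.
Qed.

Lemma Cmod_zeta_tail_term_le (s : C) b u2 N l : 0 < b <= 1 -> b <= Re s <= u2 ->
  1 <= INR N <= Rabs (Im s) -> Rabs (Im s) < INR N + 1 -> Cmod l <= Rpower (INR N) (- Re s) / Re s ->
  Cmod (s * l)%C <= 2 * (u2 + 1) / b * Rpower (Rabs (Im s)) (1 - b).
Proof.
  intros Hb Hs HN HN1 Bl. set (t := Rabs (Im s)) in *. rewrite Cmod_mult.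
  assert (Hsm : Cmod s <= (u2 + 1) * t).
  { eapply Rle_trans; [apply Cmod_le_Re_Im|]. fold t. rewrite Rabs_pos_eq by lra. nra. }
  assert (Hl : Cmod l <= 2 * Rpower t (- b) / b).
  { eapply Rle_trans; [exact Bl|]. unfold Rdiv. apply Rmult_le_compat.
    - apply Rlt_le, Rpower_pos.
    - apply Rlt_le, Rinv_0_lt_compat. lra.
    - apply Rle_trans with (Rpower (INR N) (- b)); [apply Rle_Rpower; lra|].
      apply Rpower_opp_le_twice; lra.
    - apply Rinv_le_contravar; lra. }
  replace (Rpower t (1 - b)) with (t * Rpower t (- b))
    by (rewrite <- (Rpower_1 t) at 1 by lra; rewrite <- Rpower_plus; f_equal; ring).
  pose proof (Cmod_ge_0 l). pose proof (Cmod_ge_0 s). pose proof (Rpower_pos t (- b)).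
  apply Rle_trans with ((u2 + 1) * t * (2 * Rpower t (- b) / b)); [now apply Rmult_le_compat|].
  right. field. lra.
Qed.

Lemma zeta_vertical_growth b u2 : 0 < b < 1 -> b <= u2 ->
  exists C1, 0 <= C1 /\ forall s, b <= Re s <= u2 -> 1 <= Rabs (Im s) ->
    Cmod (zeta s) <= C1 * Rpower (Rabs (Im s)) (1 - b).
Proof.
  intros Hb Hbu.
  exists (1 / (1 - b) + 1 + 2 * (u2 + 1) / b). split.
  { assert (0 <= 1 / (1 - b)) by (apply Rlt_le, Rdiv_lt_0_compat; lra).
    assert (0 <= 2 * (u2 + 1) / b) by (apply Rlt_le, Rdiv_lt_0_compat; lra). lra. }
  intros s Hs Ht. set (t := Rabs (Im s)) in *.
  assert (Hs1 : s <> 1%C) by (intros E; unfold t in Ht; rewrite E in Ht; simpl in Ht;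
    rewrite Rabs_R0 in Ht; lra).
  destruct (nat_floor t ltac:(lra)) as [N [HN1 HN2]].
  assert (HN : (1 <= N)%nat) by (destruct N; [simpl in HN2; lra|lia]).
  assert (HNr : 1 <= INR N) by (apply (le_INR 1); auto).
  destruct (is_RInt_gen_zeta_integrand s (INR N) HNr ltac:(lra)) as [l [Hl Bl]].
  rewrite (zeta_partial_sum s N l ltac:(lra) Hs1 HN Hl).
  set (T := Rpower t (1 - b)).
  assert (BA : Cmod (csum (dirichlet_term s) N) <= T / (1 - b)).
  { eapply Rle_trans; [apply Cmod_dirichlet_partial_sum_le; [exact Hb|lra|exact HN]|].
    unfold Rdiv. apply Rmult_le_compat_r; [apply Rlt_le, Rinv_0_lt_compat; lra|].
    apply Rle_Rpower_l; lra. }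
  assert (HNt : 1 <= INR N <= Rabs (Im s)) by (split; [exact HNr|exact HN1]).
  pose proof (Cmod_zeta_pole_term_le s b N ltac:(lra) HNt ltac:(lra)) as BB.
  pose proof (Cmod_zeta_tail_term_le s b u2 N l ltac:(lra) Hs HNt HN2 Bl) as BC.
  eapply Rle_trans; [apply Cmod_triangle|]. rewrite Cmod_opp.
  eapply Rle_trans; [apply Rplus_le_compat_r, Cmod_triangle|].
  fold t T in BB, BC.
  replace ((1 / (1 - b) + 1 + 2 * (u2 + 1) / b) * T) with (T / (1 - b) + T + 2 * (u2 + 1) / b * T)
    by (field; lra).
  lra.
Qed.

(** * Zeta is bounded away from zero to the right of [Re w = 1] *)

Section Rough.
Local Open Scope nat_scope.

(* For [d >= 2], [rough d d] says that [d] is prime. *)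
Fixpoint rough (d n : nat) : bool :=
  match d with
  | O => true
  | S d' => (rough d' n && ((d' <? 2) || negb (n mod d' =? 0)))%bool
  end.

Lemma roughP d n : rough d n = true <-> (forall e, 2 <= e < d -> ~ Nat.divide e n).
Proof.
  induction d as [|d IH]; simpl.
  - split; auto. intros _ e He. lia.
  - rewrite Bool.andb_true_iff, IH, Bool.orb_true_iff, Nat.ltb_lt, Bool.negb_true_iff, Nat.eqb_neq.
    split.
    + intros [H1 H2] e He. destruct (Nat.eq_dec e d) as [->|Hne].
      * destruct H2 as [H2|H2]; [lia|]. now rewrite <- Nat.Lcm0.mod_divide.
      * apply H1. lia.
    + intros H. split.
      * intros e He. apply H. lia.
      * destruct (Nat.lt_ge_cases d 2); [now left|right].
        rewrite Nat.Lcm0.mod_divide. apply H. lia.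
Qed.

Lemma rough_1 d : rough d 1 = true.
Proof. apply roughP. intros e He Hdiv. apply Nat.divide_1_r in Hdiv. lia. Qed.

Lemma rough_ge d n : rough d n = true -> 2 <= n -> d <= n.
Proof.
  intros H Hn. rewrite roughP in H. destruct (Nat.lt_ge_cases n d) as [Hl|Hl]; auto.
  exfalso. apply (H n); [lia|apply Nat.divide_refl].
Qed.

Lemma rough_prime_mul d m : 2 <= d -> rough d d = true -> rough d (d * m) = rough d m.
Proof.
  intros Hd Hp. rewrite roughP in Hp.
  apply Bool.eq_true_iff_eq. rewrite !roughP. split.
  - intros H e He Hm. apply (H e He). now apply Nat.divide_mul_r.
  - intros H e He Hm.
    assert (Hg : Nat.gcd e d = 1).
    { assert (Nat.gcd e d <> 0) by (intros Hg; apply Nat.gcd_eq_0_l in Hg; lia).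
      assert (Nat.gcd e d <= e) by (apply Nat.divide_pos_le; [lia|apply Nat.gcd_divide_l]).
      destruct (Nat.eq_dec (Nat.gcd e d) 1) as [E|E]; auto. exfalso.
      apply (Hp (Nat.gcd e d)); [lia|apply Nat.gcd_divide_r]. }
    apply (H e He). eapply Nat.gauss; eauto.
Qed.

Lemma rough_false d n : rough d n = false -> exists e, 2 <= e < d /\ Nat.divide e n.
Proof.
  induction d as [|d IH]; simpl; [discriminate|]. intros H.
  apply Bool.andb_false_iff in H as [H|H].
  - destruct (IH H) as [e [He Hdiv]]. exists e. split; [lia|exact Hdiv].
  - apply Bool.orb_false_iff in H as [H1 H2].
    apply Nat.ltb_ge in H1. apply Bool.negb_false_iff, Nat.eqb_eq in H2.
    exists d. split; [lia|]. now apply Nat.Lcm0.mod_divide.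
Qed.

Lemma rough_composite_not_divisible d n : rough d d = false -> rough d n = true -> ~ Nat.divide d n.
Proof.
  intros Hc Hn Hdiv. rewrite roughP in Hn.
  destruct (rough_false d d Hc) as [e [He Hed]].
  apply (Hn e He). eapply Nat.divide_trans; eauto.
Qed.

End Rough.

Definition rough_sum (w : C) (d N : nat) : C :=
  csum (fun n => if rough d n then dirichlet_term w n else 0%C) N.

Definition rough_multiple_term (w : C) (d n : nat) : C :=
  if (rough d n && (n mod d =? 0))%bool then dirichlet_term w n else 0%C.

Lemma rough_sum_2 (w : C) N : rough_sum w 2 N = csum (dirichlet_term w) N.
Proof. now apply csum_ext. Qed.

Lemma rough_sum_composite (w : C) d N : (2 <= d)%nat -> rough d d = false ->
  rough_sum w (S d) N = rough_sum w d N.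
Proof.
  intros Hd Hc. apply csum_ext. intros n _. simpl.
  destruct (rough d n) eqn:E; [|reflexivity].
  replace (d <? 2)%nat with false by (symmetry; apply Nat.ltb_ge; lia).
  pose proof (rough_composite_not_divisible d n Hc E) as Hn.
  rewrite <- Nat.Lcm0.mod_divide in Hn. apply Nat.eqb_neq in Hn. now rewrite Hn.
Qed.

Lemma rough_sum_diff (w : C) d N : (2 <= d)%nat ->
  (rough_sum w d N - rough_sum w (S d) N)%C = csum (rough_multiple_term w d) N.
Proof.
  intros Hd. unfold rough_sum. rewrite <- csum_minus. apply csum_ext. intros n _.
  unfold rough_multiple_term. simpl.
  replace (d <? 2)%nat with false by (symmetry; apply Nat.ltb_ge; lia).
  destruct (rough d n), (n mod d =? 0)%nat; simpl; ring.
Qed.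

Lemma csum_rough_multiple_skip (w : C) d N k : (2 <= d)%nat -> (k < d)%nat ->
  csum (rough_multiple_term w d) (d * N + k) = csum (rough_multiple_term w d) (d * N).
Proof.
  intros Hd. induction k as [|k IH]; intros Hk; [now rewrite Nat.add_0_r|].
  rewrite Nat.add_succ_r. cbn [csum]. rewrite IH by lia. unfold rough_multiple_term.
  replace (S (d * N + k) mod d =? 0)%nat with false; [rewrite Bool.andb_false_r; ring|].
  symmetry. apply Nat.eqb_neq.
  replace (S (d * N + k)) with (S k + N * d)%nat by ring.
  rewrite Nat.Div0.mod_add, Nat.mod_small; lia.
Qed.

Lemma csum_rough_multiple_reindex (w : C) d N : (2 <= d)%nat -> rough d d = true ->
  csum (fun n => if rough d n then dirichlet_term w (d * n) else 0%C) N
    = csum (rough_multiple_term w d) (d * N).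
Proof.
  intros Hd Hp. induction N as [|N IH]; [now rewrite Nat.mul_0_r|].
  replace (d * S N)%nat with (S (d * N + (d - 1))) by lia.
  cbn [csum]. rewrite csum_rough_multiple_skip, IH by lia. f_equal.
  replace (S (d * N + (d - 1))) with (d * S N)%nat by lia.
  unfold rough_multiple_term. rewrite rough_prime_mul by auto.
  replace (d * S N mod d =? 0)%nat with true; [now rewrite Bool.andb_true_r|].
  symmetry. apply Nat.eqb_eq. rewrite Nat.mul_comm. apply Nat.Div0.mod_mul.
Qed.

Lemma dirichlet_term_mult (w : C) d n : (1 <= d)%nat -> (1 <= n)%nat ->
  dirichlet_term w (d * n) = (dirichlet_term w d * dirichlet_term w n)%C.
Proof.
  intros Hd Hn. unfold dirichlet_term. rewrite mult_INR.
  apply cpow_mult_distr; apply (lt_INR 0); lia.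
Qed.

(* One sieving step: removing the multiples of the prime [d] multiplies the
   sum by [1 - d^-w], up to the tail of the Dirichlet series beyond [N]. *)
Lemma rough_sum_prime_step (w : C) d N : (2 <= d)%nat -> rough d d = true -> 1 < Re w -> (1 <= N)%nat ->
  Cmod (rough_sum w (S d) N - rough_sum w d N * (1 - dirichlet_term w d))%C
    <= Rpower (INR N) (1 - Re w) / (Re w - 1).
Proof.
  intros Hd Hp Hw HN.
  assert (E1 : (dirichlet_term w d * rough_sum w d N)%C = csum (rough_multiple_term w d) (d * N)).
  { rewrite <- csum_rough_multiple_reindex by auto. unfold rough_sum. rewrite <- csum_mult_l.
    apply csum_ext. intros n Hn. destruct (rough d n); [|ring].
    rewrite dirichlet_term_mult by lia. ring. }
  replace (rough_sum w (S d) N - rough_sum w d N * (1 - dirichlet_term w d))%C with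
     (dirichlet_term w d * rough_sum w d N - (rough_sum w d N - rough_sum w (S d) N))%C by ring.
  rewrite E1, rough_sum_diff by auto.
  eapply Rle_trans.
  { apply (Cmod_csum_diff_le _ (fun n => Rpower (INR n) (- Re w))); [nia|].
    intros n Hn. unfold rough_multiple_term. destruct (_ && _)%bool.
    - rewrite Cmod_dirichlet_term by lia. lra.
    - rewrite Cmod_0. apply Rlt_le, Rpower_pos. }
  apply rsum_Rpower_tail_le; [lra|nia].
Qed.

Lemma rough_sum_initial (w : C) d n : (2 <= d)%nat -> (1 <= n <= d - 1)%nat -> rough_sum w d n = 1%C.
Proof.
  intros Hd. induction n as [|n IH]; intros Hn; [lia|].
  destruct (Nat.eq_dec n 0) as [->|Hn0].
  - unfold rough_sum. simpl. rewrite rough_1. unfold dirichlet_term. simpl INR.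
    rewrite cpow_base_1. ring.
  - unfold rough_sum in *. simpl. rewrite IH by lia.
    replace (rough d (S n)) with false; [ring|].
    destruct (rough d (S n)) eqn:E; [apply rough_ge in E; lia|reflexivity].
Qed.

Lemma rough_sum_near_1 (w : C) d N : (2 <= d)%nat -> (d - 1 <= N)%nat -> 1 < Re w ->
  Cmod (rough_sum w d N - 1)%C <= Rpower (INR (d - 1)) (1 - Re w) / (Re w - 1).
Proof.
  intros Hd HN Hw. rewrite <- (rough_sum_initial w d (d - 1)) by lia. unfold rough_sum.
  eapply Rle_trans.
  { apply (Cmod_csum_diff_le _ (fun n => Rpower (INR n) (- Re w))); [exact HN|].
    intros n Hn. destruct (rough d n).
    - rewrite Cmod_dirichlet_term by lia. lra.
    - rewrite Cmod_0. apply Rlt_le, Rpower_pos. }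
  apply rsum_Rpower_tail_le; [lra|lia].
Qed.

Definition is_Clim_seq (u : nat -> C) (L : C) :=
  forall eps, 0 < eps -> exists N0, forall N, (N0 <= N)%nat -> Cmod (u N - L)%C < eps.

Lemma eventually_Rpower_INR_small e : e < 0 -> forall eps, 0 < eps ->
  exists N0 : nat, forall N, (N0 <= N)%nat -> (1 <= N)%nat /\ Rpower (INR N) e < eps.
Proof.
  intros He eps Heps.
  destruct (filterlim_locally_Rabs _ _ (Rpower_lim_p_infty e He) eps Heps) as [M HM].
  destruct (nat_floor (Rabs M)) as [n [_ Hn]]; [apply Rabs_pos|].
  exists (S n). intros N HN. split; [lia|].
  assert (HMN : M < INR N) by (pose proof (Rle_abs M); apply le_INR in HN; rewrite S_INR in HN; lra).
  specialize (HM _ HMN). rewrite Rminus_0_r, Rabs_pos_eq in HM by (apply Rlt_le, Rpower_pos). exact HM.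
Qed.

Lemma partial_sums_zeta w : 1 < Re w -> is_Clim_seq (csum (dirichlet_term w)) (zeta w).
Proof.
  intros Hw eps Heps.
  assert (Hw1 : w <> 1%C) by (intros E; rewrite E in Hw; simpl in Hw; lra).
  assert (Hm1 : 0 < Cmod (w - 1)%C) by (apply Cmod_gt_0; intros E; apply Hw1;
    replace w with ((w - 1) + 1)%C by ring; rewrite E; ring).
  pose proof (Cmod_ge_0 w).
  assert (E1 : 0 < eps * Cmod (w - 1)%C / 2) by (apply Rdiv_lt_0_compat; [apply Rmult_lt_0_compat|]; lra).
  assert (E2 : 0 < eps * Re w / (2 * (Cmod w + 1)))
    by (apply Rdiv_lt_0_compat; [apply Rmult_lt_0_compat|]; lra).
  destruct (eventually_Rpower_INR_small (1 - Re w) ltac:(lra) _ E1) as [N1 H1].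
  destruct (eventually_Rpower_INR_small (- Re w) ltac:(lra) _ E2) as [N2 H2].
  exists (Nat.max N1 N2). intros N HN.
  destruct (H1 N ltac:(lia)) as [HN1 B1]. destruct (H2 N ltac:(lia)) as [_ B2].
  assert (HNr : 1 <= INR N) by (apply (le_INR 1); auto).
  destruct (is_RInt_gen_zeta_integrand w (INR N) HNr ltac:(lra)) as [l [Hl Bl]].
  rewrite (zeta_partial_sum w N l ltac:(lra) Hw1 HN1 Hl).
  replace (csum (dirichlet_term w) N - (csum (dirichlet_term w) N + cpow (INR N) (1 - w) / (w - 1) - w * l))%C
    with (w * l - cpow (INR N) (1 - w) / (w - 1))%C by ring.
  eapply Rle_lt_trans; [apply Cmod_triangle|].
  rewrite Cmod_opp, Cmod_mult, Cmod_div, Cmod_cpow, Re_minus, re_RtoC by (lra || now apply Cmod_gt_0).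
  assert (A1 : Rpower (INR N) (1 - Re w) / Cmod (w - 1)%C < eps / 2).
  { apply Rmult_lt_reg_r with (Cmod (w - 1)%C); auto. unfold Rdiv at 1.
    rewrite Rmult_assoc, Rinv_l, Rmult_1_r by lra. lra. }
  assert (A2 : Cmod w * Cmod l < eps / 2).
  { apply Rle_lt_trans with ((Cmod w + 1) * (Rpower (INR N) (- Re w) / Re w)).
    - apply Rmult_le_compat; [auto|apply Cmod_ge_0|lra|auto].
    - apply Rmult_lt_reg_r with (Re w / (Cmod w + 1)); [apply Rdiv_lt_0_compat; lra|].
      replace ((Cmod w + 1) * (Rpower (INR N) (- Re w) / Re w) * (Re w / (Cmod w + 1)))
        with (Rpower (INR N) (- Re w)) by (field; lra).
      replace (eps / 2 * (Re w / (Cmod w + 1))) with (eps * Re w / (2 * (Cmod w + 1))) by (field; lra).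
      exact B2. }
  lra.
Qed.

Definition euler_factor (w : C) (d : nat) : C := if rough d d then (1 - dirichlet_term w d)%C else 1%C.

(* The product of [1 - p^-w] over the primes [p < k + 2]. *)
Fixpoint euler_product (w : C) (k : nat) : C :=
  match k with O => 1%C | S k' => (euler_product w k' * euler_factor w (k' + 2))%C end.

Lemma Cmod_one_minus_dirichlet_term_le (w : C) d : 0 < Re w -> (1 <= d)%nat ->
  Cmod (1 - dirichlet_term w d)%C <= 2.
Proof.
  intros Hw Hd. eapply Rle_trans; [unfold Cminus; apply Cmod_triangle|].
  rewrite Cmod_1, Cmod_opp, Cmod_dirichlet_term by lia.
  assert (Rpower (INR d) (- Re w) <= 1).
  { rewrite <- (Rpower_O (INR d)) by (apply (lt_INR 0); lia).
    apply Rle_Rpower; [apply (le_INR 1); lia|lra]. }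
  lra.
Qed.

Lemma Cmod_euler_product_le w k : 0 < Re w -> Cmod (euler_product w k) <= 2 ^ k.
Proof.
  intros Hw. induction k as [|k IH]; simpl; [rewrite Cmod_1; lra|].
  rewrite Cmod_mult. pose proof (Cmod_ge_0 (euler_product w k)).
  assert (Cmod (euler_factor w (k + 2)) <= 2).
  { unfold euler_factor. destruct (rough _ _).
    - apply Cmod_one_minus_dirichlet_term_le; [lra|lia].
    - rewrite Cmod_1. lra. }
  rewrite Rmult_comm. apply Rmult_le_compat; auto. apply Cmod_ge_0.
Qed.

Lemma rough_sum_lim w k : 1 < Re w -> is_Clim_seq (rough_sum w (k + 2)) (zeta w * euler_product w k)%C.
Proof.
  intros Hw. induction k as [|k IH].
  - intros eps Heps. destruct (partial_sums_zeta w Hw eps Heps) as [N0 H0].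
    exists N0. intros N HN. simpl. rewrite rough_sum_2, Cmult_1_r. auto.
  - set (d := (k + 2)%nat) in *. replace (S k + 2)%nat with (S d) by (unfold d; lia).
    simpl euler_product. fold d. unfold euler_factor.
    destruct (rough d d) eqn:Hp.
    + intros eps Heps.
      destruct (IH (eps / 4) ltac:(lra)) as [N1 H1].
      destruct (eventually_Rpower_INR_small (1 - Re w) ltac:(lra) (eps / 4 * (Re w - 1)))
        as [N2 H2]; [apply Rmult_lt_0_compat; lra|].
      exists (Nat.max N1 N2). intros N HN.
      destruct (H2 N ltac:(lia)) as [HN1 B2].
      pose proof (rough_sum_prime_step w d N ltac:(unfold d; lia) Hp Hw HN1) as Hstep.
      pose proof (Cmod_one_minus_dirichlet_term_le w d ltac:(lra) ltac:(unfold d; lia)) as Hf.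
      replace (rough_sum w (S d) N - zeta w * (euler_product w k * (1 - dirichlet_term w d)))%C with
        ((rough_sum w (S d) N - rough_sum w d N * (1 - dirichlet_term w d))
         + (rough_sum w d N - zeta w * euler_product w k) * (1 - dirichlet_term w d))%C by ring.
      eapply Rle_lt_trans; [apply Cmod_triangle|]. rewrite Cmod_mult.
      assert (Cmod (rough_sum w d N - zeta w * euler_product w k)%C < eps / 4) by (apply H1; lia).
      assert (Rpower (INR N) (1 - Re w) / (Re w - 1) < eps / 4).
      { apply Rmult_lt_reg_r with (Re w - 1); [lra|].
        unfold Rdiv. rewrite Rmult_assoc, Rinv_l by lra. lra. }
      pose proof (Cmod_ge_0 (rough_sum w d N - zeta w * euler_product w k)%C).
      pose proof (Cmod_ge_0 (1 - dirichlet_term w d)%C).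
      nra.
    + intros eps Heps. destruct (IH eps Heps) as [N0 H0]. exists N0. intros N HN.
      rewrite rough_sum_composite, Cmult_1_r by (auto; unfold d; lia). auto.
Qed.

Lemma zeta_bounded_below nu : 1 < nu ->
  exists c, 0 < c /\ forall w, nu <= Re w -> c <= Cmod (zeta w).
Proof.
  intros Hnu.
  destruct (eventually_Rpower_INR_small (1 - nu) ltac:(lra) ((nu - 1) / 4)) as [k Hk];
    [apply Rdiv_lt_0_compat; lra|].
  destruct (Hk (S k) ltac:(lia)) as [_ Bk].
  set (D := (k + 2)%nat).
  exists (/ 2 / 2 ^ k). split; [apply Rdiv_lt_0_compat; [lra|apply pow_lt; lra]|].
  intros w Hw.
  assert (Htail : Rpower (INR (D - 1)) (1 - Re w) / (Re w - 1) <= / 4).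
  { replace (D - 1)%nat with (S k) by (unfold D; lia).
    apply Rle_trans with (Rpower (INR (S k)) (1 - nu) / (nu - 1)).
    - unfold Rdiv. apply Rmult_le_compat.
      + apply Rlt_le, Rpower_pos.
      + apply Rlt_le, Rinv_0_lt_compat; lra.
      + apply Rle_Rpower; [apply (le_INR 1); lia|lra].
      + apply Rinv_le_contravar; lra.
    - apply Rmult_le_reg_r with (nu - 1); [lra|]. unfold Rdiv. rewrite Rmult_assoc, Rinv_l by lra. lra. }
  destruct (rough_sum_lim w k ltac:(lra) (/ 4) ltac:(lra)) as [N1 H1].
  set (N := Nat.max N1 D).
  pose proof (H1 N ltac:(unfold N; lia)) as A. fold D in A.
  pose proof (rough_sum_near_1 w D N ltac:(unfold D; lia) ltac:(unfold N; lia) ltac:(lra)) as B.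
  assert (Hz : / 2 <= Cmod (zeta w * euler_product w k)%C).
  { set (a := (zeta w * euler_product w k)%C) in *.
    pose proof (Cmod_triangle (a + (rough_sum w D N - a)) (- (rough_sum w D N - 1))) as T1.
    pose proof (Cmod_triangle a (rough_sum w D N - a)) as T2.
    assert (E : (a + (rough_sum w D N - a) + - (rough_sum w D N - 1))%C = RtoC 1) by ring.
    rewrite E, Cmod_1, Cmod_opp in T1. lra. }
  rewrite Cmod_mult in Hz. pose proof (Cmod_euler_product_le w k ltac:(lra)).
  pose proof (Cmod_ge_0 (zeta w)). pose proof (pow_lt 2 k ltac:(lra)).
  apply Rmult_le_reg_r with (2 ^ k); [auto|]. unfold Rdiv. rewrite Rmult_assoc, Rinv_l by lra. nra.
Qed.

(** * An integrable majorant *)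

Lemma is_RInt_gen_antiderivative (Fa Fb : (R -> Prop) -> Prop) {FFa : Filter Fa} {FFb : Filter Fb}
    (D : R -> Prop) (h Phi : R -> R) pa pb :
  Fa D -> Fb D -> (forall x y z, D x -> D y -> Rmin x y <= z <= Rmax x y -> D z) ->
  (forall x, D x -> is_derive Phi x (h x)) -> (forall x, D x -> continuous h x) ->
  filterlim Phi Fa (locally pa) -> filterlim Phi Fb (locally pb) ->
  is_RInt_gen h Fa Fb (pb - pa).
Proof.
  intros HDa HDb Hconv Hd Hc Ha Hb.
  apply (filterlimi_lim_ext_loc (fun ab => Phi (snd ab) - Phi (fst ab))).
  - apply (Filter_prod _ _ _ D D HDa HDb). intros x y Dx Dy.
    apply (is_RInt_derive (V := R_CompleteNormedModule) Phi h); intros z Hz;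
      [apply Hd|apply Hc]; apply (Hconv x y z); auto.
  - apply filterlim_locally. intros eps.
    apply (Filter_prod _ _ _ (fun x => Rabs (Phi x - pa) < eps / 2) (fun y => Rabs (Phi y - pb) < eps / 2));
      [apply filterlim_locally_Rabs; [exact Ha|pose proof (cond_pos eps); lra]
      |apply filterlim_locally_Rabs; [exact Hb|pose proof (cond_pos eps); lra]|].
    intros x y Hx Hy. apply ball_R. simpl.
    replace (Phi y - Phi x - (pb - pa)) with ((Phi y - pb) - (Phi x - pa)) by ring.
    eapply Rle_lt_trans; [apply Rabs_triang|]. rewrite Rabs_Ropp. lra.
Qed.

Lemma filterlim_shift_p_infty (a : R) : filterlim (fun x => a + x) (Rbar_locally p_infty) (Rbar_locally p_infty).
Proof. intros P [M HM]. exists (M - a). intros x Hx. apply HM. lra. Qed.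

Lemma filterlim_shift_m_infty (a : R) : filterlim (fun x => a - x) (Rbar_locally m_infty) (Rbar_locally p_infty).
Proof. intros P [M HM]. exists (a - M). intros x Hx. apply HM. lra. Qed.

Section DecayMajorant.

Variables (K p : R).
Hypotheses (HK : 0 <= K) (Hp : 1 < p).

Definition decay_majorant (t : R) : R := K * Rpower (1 + Rabs t) (- p).

Lemma continuous_decay_majorant t : continuous decay_majorant t.
Proof.
  apply (continuous_comp (fun t => 1 + Rabs t) (fun y => K * Rpower y (- p))).
  - apply (continuous_plus (V := R_NormedModule) (fun _ => 1) Rabs);
      [apply continuous_const|apply continuous_Rabs].
  - apply (ex_derive_continuous (V := R_NormedModule)).
    unfold Rpower. auto_derive. pose proof (Rabs_pos t). lra.
Qed.

Lemma decay_majorant_nonneg t : 0 <= decay_majorant t.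
Proof. apply Rmult_le_pos; [exact HK|apply Rlt_le, Rpower_pos]. Qed.

Lemma ex_RInt_gen_decay_majorant_p_infty t0 : 0 < t0 ->
  ex_RInt_gen (fun t => Rabs (decay_majorant t)) (at_point t0) (Rbar_locally p_infty).
Proof.
  intros Ht0.
  apply (ex_RInt_gen_ext_eq decay_majorant);
    [intros t; symmetry; apply Rabs_pos_eq, decay_majorant_nonneg|].
  eexists. apply (is_RInt_gen_antiderivative _ _ (fun x => 0 < x) decay_majorant
    (fun y => - K / (p - 1) * Rpower (1 + y) (1 - p))).
  - unfold at_point. lra.
  - exists 0. auto.
  - intros x y z Hx Hy Hz. pose proof (Rmin_glb_lt _ _ _ Hx Hy). lra.
  - intros x Hx. unfold decay_majorant. rewrite Rabs_pos_eq by lra. unfold Rpower.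
    auto_derive; [lra|]. replace ((1 - p) * ln (1 + x)) with (- p * ln (1 + x) + ln (1 + x)) by ring.
    rewrite exp_plus, exp_ln by lra. field. lra.
  - intros x _. apply continuous_decay_majorant.
  - apply filterlim_at_point.
  - replace 0 with (- K / (p - 1) * 0) by ring. apply filterlim_Rmult_l.
    apply (filterlim_comp _ _ _ (fun y => 1 + y) (fun y => Rpower y (1 - p)) _ (Rbar_locally p_infty));
      [apply filterlim_shift_p_infty|apply Rpower_lim_p_infty; lra].
Qed.

Lemma ex_RInt_gen_decay_majorant_m_infty t0 : 0 < t0 ->
  ex_RInt_gen (fun t => Rabs (decay_majorant t)) (Rbar_locally m_infty) (at_point (- t0)).
Proof.
  intros Ht0.
  apply (ex_RInt_gen_ext_eq decay_majorant);
    [intros t; symmetry; apply Rabs_pos_eq, decay_majorant_nonneg|].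
  eexists. apply (is_RInt_gen_antiderivative _ _ (fun x => x < 0) decay_majorant
    (fun y => K / (p - 1) * Rpower (1 - y) (1 - p))).
  - exists 0. auto.
  - unfold at_point. lra.
  - intros x y z Hx Hy Hz. pose proof (Rmax_lub_lt _ _ _ Hx Hy). lra.
  - intros x Hx. unfold decay_majorant. rewrite Rabs_left by lra. unfold Rpower.
    auto_derive; [lra|]. replace (1 + - x) with (1 - x) by ring.
    replace ((1 - p) * ln (1 - x)) with (- p * ln (1 - x) + ln (1 - x)) by ring.
    rewrite exp_plus, exp_ln by lra. field. lra.
  - intros x _. apply continuous_decay_majorant.
  - replace 0 with (K / (p - 1) * 0) by ring. apply filterlim_Rmult_l.
    apply (filterlim_comp _ _ _ (fun y => 1 - y) (fun y => Rpower y (1 - p)) _ (Rbar_locally p_infty));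
      [apply filterlim_shift_m_infty|apply Rpower_lim_p_infty; lra].
  - apply filterlim_at_point.
Qed.

End DecayMajorant.

Lemma Cmod_power_quotient_le (Z Dz Mz : C) (k m : nat) C0 C1 c b t :
  0 < c -> 0 <= C0 -> 0 <= C1 -> 1 <= t -> 0 <= INR m - INR k * (1 - b) ->
  Cmod Z <= C1 * Rpower t (1 - b) -> c <= Cmod Dz -> Cmod Mz <= C0 / t ^ m ->
  Cmod (Cpow Z k / Dz * Mz)%C
    <= C1 ^ k * C0 / c * Rpower 2 (INR m - INR k * (1 - b)) * Rpower (1 + t) (- (INR m - INR k * (1 - b))).
Proof.
  intros Hc HC0 HC1 Ht Hp HZ HD HM. set (p := INR m - INR k * (1 - b)) in *.
  assert (HDz : Dz <> 0%C) by (intros E; rewrite E, Cmod_0 in HD; lra).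
  rewrite Cmod_mult, Cmod_div, Cmod_pow by exact HDz.
  set (T := Rpower t (1 - b)).
  pose proof (Cmod_ge_0 Z). pose proof (Cmod_ge_0 Mz). pose proof (Rpower_pos t (1 - b)).
  assert (Htm : 0 < t ^ m) by (apply pow_lt; lra).
  apply Rle_trans with ((C1 * T) ^ k / c * (C0 / t ^ m)).
  { apply Rmult_le_compat; [| |unfold Rdiv; apply Rmult_le_compat|]; try assumption.
    - apply Rmult_le_pos; [apply pow_le; auto|apply Rlt_le, Rinv_0_lt_compat; lra].
    - apply pow_le; auto.
    - apply Rlt_le, Rinv_0_lt_compat. lra.
    - apply pow_incr; auto.
    - apply Rinv_le_contravar; auto. }
  assert (ET : T ^ k / t ^ m = Rpower t (- p)).
  { unfold T. rewrite <- (Rpower_pow k (Rpower t (1 - b))) by apply Rpower_pos.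
    rewrite Rpower_mult, <- Rpower_pow by lra. unfold Rdiv.
    rewrite <- Rpower_Ropp, <- Rpower_plus. f_equal. unfold p. ring. }
  replace ((C1 * T) ^ k / c * (C0 / t ^ m)) with (C1 ^ k * C0 / c * (T ^ k / t ^ m))
    by (rewrite Rpow_mult_distr; field; lra).
  rewrite ET, Rmult_assoc. apply Rmult_le_compat_l.
  { unfold Rdiv. apply Rmult_le_pos; [apply Rmult_le_pos; [apply pow_le|]|apply Rlt_le, Rinv_0_lt_compat]; lra. }
  eapply Rle_trans; [apply (Rpower_le_anti ((1 + t) / 2) t (- p)); lra|].
  replace ((1 + t) / 2) with (/ 2 * (1 + t)) by field.
  rewrite <- Rpower_mult_distr by lra.
  replace (Rpower (/ 2) (- p)) with (Rpower 2 p) by (unfold Rpower; rewrite ln_Rinv by lra; f_equal; ring).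
  lra.
Qed.

Lemma exponent_gap (k m : nat) b : (1 <= k)%nat -> 1 + INR k / 2 <= INR m -> 1 / 2 < b ->
  1 < INR m - INR k * (1 - b).
Proof.
  intros Hk Hm Hb. assert (1 <= INR k) by (apply (le_INR 1); auto).
  assert (0 < INR k * (b - 1 / 2)) by (apply Rmult_lt_0_compat; lra). lra.
Qed.

Theorem proposition4 (alpha : R) (k m : nat) (f : R -> R) (t0 u1 u2 : R) :
  1 < alpha ->
  (1 <= k)%nat ->
  1 + INR k / 2 <= INR m ->
  class_M alpha m f ->
  1 < t0 -> 1 / 2 < u1 -> u1 < u2 -> u2 < alpha ->
  exists g : R -> R,
    (forall t, continuous g t) /\
    ex_RInt_gen (fun t => Rabs (g t)) (at_point t0) (Rbar_locally p_infty) /\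
    ex_RInt_gen (fun t => Rabs (g t)) (Rbar_locally m_infty) (at_point (- t0)) /\
    (forall s : C, u1 <= Re s <= u2 -> t0 <= Rabs (Im s) ->
       Cmod (Cmult (Cdiv (Cpow (zeta s) k) (zeta (Cmult 2 s))) (mellin f s))
         <= g (Im s)).
Proof.
  intros Ha Hk Hm HM Ht0 Hu1 Hu12 Hu2.
  set (b := Rmin u1 (3/4)).
  assert (Hb : 1/2 < b <= u1) by (split; [apply Rmin_glb_lt|apply Rmin_l]; lra).
  assert (Hb1 : b < 1) by (unfold b; pose proof (Rmin_r u1 (3/4)); lra).
  destruct (mellin_bound alpha m f u1 u2 HM ltac:(lra) Hu2) as [C0 [HC0 BM]].
  destruct (zeta_vertical_growth b u2 ltac:(lra) ltac:(lra)) as [C1 [HC1 BZ]].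
  destruct (zeta_bounded_below (2 * u1) ltac:(lra)) as [c [Hc BL]].
  set (p := INR m - INR k * (1 - b)).
  assert (Hp : 1 < p) by (apply exponent_gap; lra || auto).
  set (K := C1 ^ k * C0 / c * Rpower 2 p).
  assert (HK : 0 <= K).
  { unfold K. pose proof (Rpower_pos 2 p). pose proof (pow_le C1 k HC1).
    unfold Rdiv. repeat apply Rmult_le_pos; try lra. apply Rlt_le, Rinv_0_lt_compat. lra. }
  exists (decay_majorant K p). split; [|split; [|split]].
  - apply continuous_decay_majorant.
  - apply ex_RInt_gen_decay_majorant_p_infty; lra.
  - apply ex_RInt_gen_decay_majorant_m_infty; lra.
  - intros s Hs Hts. unfold decay_majorant, K.
    apply (Cmod_power_quotient_le _ _ _ k m C0 C1 c b); try lra; [unfold p in Hp; lra| | |].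
    + apply BZ; lra.
    + apply BL. rewrite re_scal_l. lra.
    + apply BM; lra.
Qed.
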